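(* Let $n\ge2$ and $x\in[0,1[$. Then $C^*_{\rho_x}(V_n)=\pi_x(\mathcal{O}_n)$, where $C^*_{\rho_x}(V_n)=\overline{\mathrm{span}\{\rho_x(g):g\in V_n\}}^{\|\cdot\|}\subseteq B(H_x)$.
   Context: $f(y)=ny\bmod1$ on $[0,1[$; $\mathrm{orb}(x)=\{y\in[0,1[:\ f^p(y)=f^q(x)\text{ for some }p,q\in\mathbb{N}\}$; $H_x=\ell^2(\mathrm{orb}(x))$ with orthonormal basis $\{\delta_y\}$; $S_i\delta_y=\delta_{(y+i-1)/n}$; $\pi_x:\mathcal{O}_n\to B(H_x)$ is the representation of the Cuntz algebra ($\sum_j s_js_j^*=1$, $s_i^*s_j=\delta_{ij}1$) with $\pi_x(s_i)=S_i$, so $\pi_x(\mathcal{O}_n)$ is the C*-algebra generated by $S_1,\dots,S_n$. For a word $u=u_1\cdots u_r$, $\phi(u)=\big[\sum_i\frac{u_i-1}{n^i},\sum_i\frac{u_i-1}{n^i}+n^{-r}\big[$ and $s_u=s_{u_1}\cdots s_{u_r}$. $V_n$ is the group of bijections $g$ of $[0,1[$ for which there are admissible languages (finite sets of words over $\{1,\dots,n\}$ such that every infinite word has exactly one of them as prefix) $\{a_1,\dots,a_r\}$, $\{b_1,\dots,b_r\}$ with $g$ mapping $\phi(b_i)$ onto $\phi(a_i)$ by the increasing affine map; $\Psi_n(g)=\sum_i s_{a_i}s_{b_i}^*$ (independent of the choice), and $\rho_x=\pi_x\circ\Psi_n$, which satisfies $\rho_x(g)\delta_y=\delta_{g(y)}$.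 *)

From Stdlib Require Import Reals List.
From Coquelicot Require Import Coquelicot.
Import ListNotations.
Open Scope R_scope.

Definition fmap (n : nat) (y : R) : R := frac_part (INR n * y).

Definition orb (n : nat) (x y : R) : Prop :=
  0 <= y < 1 /\ exists p q : nat, Nat.iter p (fmap n) y = Nat.iter q (fmap n) x.

(** * The Hilbert space H_x = l^2(orb x), realised as functions R -> C
    vanishing off orb x with square-summable values. *)
Definition vec := R -> C.
Definition op := vec -> vec.

Definition finsub (n : nat) (x : R) (l : list R) : Prop :=
  NoDup l /\ List.Forall (orb n x) l.

Definition lsumR (F : R -> R) (l : list R) : R := fold_right (fun y a => F y + a) 0 l.
Definition lsumC (F : R -> C) (l : list R) : C :=
  fold_right (fun y a => Cplus (F y) a) (RtoC 0) l.

Definition NormLe (n : nat) (x : R) (v : vec) (c : R) : Prop :=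
  0 <= c /\ forall l, finsub n x l -> lsumR (fun y => (Cmod (v y)) ^ 2) l <= c ^ 2.

Definition InH (n : nat) (x : R) (v : vec) : Prop :=
  (forall y, ~ orb n x y -> v y = RtoC 0) /\ exists c, NormLe n x v c.

Definition HasSum (n : nat) (x : R) (F : R -> C) (c : C) : Prop :=
  forall eps, 0 < eps -> exists l0, finsub n x l0 /\
    forall l, finsub n x l -> incl l0 l -> Cmod (Cminus (lsumC F l) c) < eps.

(* inner product <v, w> = c (conjugate-linear in the first variable) *)
Definition Inner (n : nat) (x : R) (v w : vec) (c : C) : Prop :=
  HasSum n x (fun y => Cmult (Cconj (v y)) (w y)) c.

Definition OpNormLe (n : nat) (x : R) (T : op) (M : R) : Prop :=
  0 <= M /\ forall v c, InH n x v -> NormLe n x v c -> NormLe n x (T v) (M * c).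

Definition BoundedOp (n : nat) (x : R) (T : op) : Prop :=
  (forall v, InH n x v -> InH n x (T v)) /\
  (forall v w, InH n x v -> InH n x w ->
     T (fun z => Cplus (v z) (w z)) = (fun z => Cplus (T v z) (T w z))) /\
  (forall (a : C) v, InH n x v -> T (fun z => Cmult a (v z)) = (fun z => Cmult a (T v z))) /\
  exists M, OpNormLe n x T M.

Definition IsAdjoint (n : nat) (x : R) (T T' : op) : Prop :=
  BoundedOp n x T' /\
  forall v w, InH n x v -> InH n x w ->
    forall c, Inner n x (T v) w c <-> Inner n x v (T' w) c.

Definition op_add (T U : op) : op := fun v z => Cplus (T v z) (U v z).
Definition op_scal (a : C) (T : op) : op := fun v z => Cmult a (T v z).
Definition op_comp (T U : op) : op := fun v => T (U v).
Definition op_zero : op := fun _ _ => RtoC 0.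

Definition Closure (n : nat) (x : R) (P : op -> Prop) (T : op) : Prop :=
  forall eps, 0 < eps -> exists A, P A /\
    exists M, M < eps /\ OpNormLe n x (fun v z => Cminus (T v z) (A v z)) M.

Definition Span (P : op -> Prop) (T : op) : Prop :=
  exists l : list (C * op), List.Forall (fun p => P (snd p)) l /\
    T = fold_right (fun p acc => op_add (op_scal (fst p) (snd p)) acc) op_zero l.

(** * The generators S_i: S_i delta_y = delta_{(y+i-1)/n} *)
Definition Sop (n i : nat) : op := fun v z =>
  if Rle_dec ((INR i - 1) / INR n) z then
    if Rlt_dec z (INR i / INR n) then v (INR n * z - (INR i - 1)) else RtoC 0
  else RtoC 0.

Definition CStarSubalg (n : nat) (x : R) (A : op -> Prop) : Prop :=
  (forall T, A T -> BoundedOp n x T) /\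
  A op_zero /\
  (forall T U, A T -> A U -> A (op_add T U)) /\
  (forall a T, A T -> A (op_scal a T)) /\
  (forall T U, A T -> A U -> A (op_comp T U)) /\
  (forall T T', A T -> IsAdjoint n x T T' -> A T') /\
  (forall T, BoundedOp n x T -> Closure n x A T -> A T).

Definition PiOn (n : nat) (x : R) (T : op) : Prop :=
  forall A, CStarSubalg n x A -> (forall i, (1 <= i <= n)%nat -> A (Sop n i)) -> A T.

Definition word := list nat.

Definition is_word (n : nat) (u : word) : Prop := List.Forall (fun a => (1 <= a <= n)%nat) u.

Definition is_prefix (u : word) (w : nat -> nat) : Prop :=
  forall k, (k < length u)%nat -> w k = nth k u 0%nat.

Definition admissible (n : nat) (L : list word) : Prop :=
  NoDup L /\ List.Forall (is_word n) L /\
  forall w : nat -> nat, (forall k, (1 <= w k <= n)%nat) ->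
    exists u, In u L /\ is_prefix u w /\
      forall u', In u' L -> is_prefix u' w -> u' = u.

(* left endpoint sum_i (u_i - 1)/n^i of phi(u) *)
Fixpoint wleft (n : nat) (u : word) : R :=
  match u with
  | [] => 0
  | a :: u' => (INR a - 1) / INR n + wleft n u' / INR n
  end.

Definition wlen (n : nat) (u : word) : R := (/ INR n) ^ length u.

Definition in_phi (n : nat) (u : word) (y : R) : Prop :=
  wleft n u <= y < wleft n u + wlen n u.

Definition InVn (n : nat) (g : R -> R) : Prop :=
  (forall y, 0 <= y < 1 -> 0 <= g y < 1) /\
  (forall y y', 0 <= y < 1 -> 0 <= y' < 1 -> g y = g y' -> y = y') /\
  (forall z, 0 <= z < 1 -> exists y, 0 <= y < 1 /\ g y = z) /\
  exists la lb : list word,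
    length la = length lb /\ admissible n la /\ admissible n lb /\
    forall k, (k < length la)%nat ->
      let a := nth k la [] in let b := nth k lb [] in
      forall y, in_phi n b y ->
        g y = wleft n a + (y - wleft n b) * (wlen n a / wlen n b).

(* rho_x(g): the operator with rho_x(g) delta_y = delta_{g(y)} *)
Definition RhoOp (g : R -> R) (T : op) : Prop :=
  (forall v y, 0 <= y < 1 -> T v (g y) = v y) /\
  (forall v z, ~ (0 <= z < 1) -> T v z = RtoC 0).

Definition RhoSet (n : nat) (T : op) : Prop := exists g, InVn n g /\ RhoOp g T.

From Stdlib Require Import Reals List Lra Lia ZArith Classical FunctionalExtensionality FinFun Permutation.
From Coquelicot Require Import Coquelicot.
Import ListNotations.
Open Scope R_scope.

(** The proof runs through the "matrix units" M_{a,b} = S_a S_b^* indexed by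
    pairs of words; concretely (M_{a,b} v)(z) = v(psi z) for z in the
    cylinder phi(a), where psi is the increasing affine bijection of phi(a)
    onto phi(b), and 0 elsewhere (definition [Mop]).
    (<=) If g in V_n is given by admissible languages {a_i}, {b_i}, then
    rho_x(g) = sum_i M_{a_i,b_i}; every M_{a,b} is a product of S_i's and
    their adjoints, so it lies in every C*-algebra containing the S_i.
    (>=) The closed span of the matrix units is itself a C*-subalgebra
    (products of matrix units are matrix units or 0, and M_{a,b}^* = M_{b,a})
    containing S_i = M_{i,empty}; hence it contains pi_x(O_n).  Conversely
    every matrix unit is in the closed span of rho_x(V_n): after appending a
    common last letter both words are nonempty, and then M_{a,b} is the
    average of m differences rho_x(g_j) - rho_x(h_j), up to three error terms
    built from matrix units with pairwise disjoint (co)domains, of norm at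
    most 1/sqrt m each. *)

Ltac cring := unfold Cminus, Cplus, Cmult, Copp, Cconj, RtoC in *;
  apply injective_projections; simpl; ring.

Lemma nR_ge2 (n : nat) : (2 <= n)%nat -> 2 <= INR n.
Proof. intro h. apply le_INR in h. simpl in h. lra. Qed.

(** ** Cylinders phi(u) and digit expansions *)

Lemma wlen_pos n u : (2 <= n)%nat -> 0 < wlen n u.
Proof.
  intro h. unfold wlen. apply pow_lt. apply Rinv_0_lt_compat.
  pose proof (nR_ge2 n h); lra.
Qed.

Lemma wlen_nil n : wlen n [] = 1.
Proof. reflexivity. Qed.

Lemma wlen_cons n a u : wlen n (a :: u) = wlen n u / INR n.
Proof. unfold wlen. simpl. unfold Rdiv. ring. Qed.

Lemma wleft_cons n a u : wleft n (a :: u) = (INR a - 1) / INR n + wleft n u / INR n.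
Proof. reflexivity. Qed.

Lemma wlen_app n u w : wlen n (u ++ w) = wlen n u * wlen n w.
Proof. unfold wlen. rewrite length_app, pow_add. reflexivity. Qed.

Lemma wleft_app n u w : (2 <= n)%nat -> wleft n (u ++ w) = wleft n u + wlen n u * wleft n w.
Proof.
  intro h. pose proof (nR_ge2 n h). induction u as [|a u IH].
  - simpl. rewrite wlen_nil. ring.
  - simpl app. rewrite !wleft_cons, IH, wlen_cons. field. lra.
Qed.

Lemma is_word_app n u w : is_word n u -> is_word n w -> is_word n (u ++ w).
Proof. intros. apply Forall_app; auto. Qed.

Lemma wleft_bounds n u : (2 <= n)%nat -> is_word n u ->
  0 <= wleft n u /\ wleft n u + wlen n u <= 1.
Proof.
  intros h. pose proof (nR_ge2 n h) as hn.
  induction u as [|a u IH]; intro hw.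
  - simpl. rewrite wlen_nil. lra.
  - inversion hw as [|? ? ha hu]; subst. specialize (IH hu).
    rewrite wleft_cons, wlen_cons.
    destruct ha as [ha1 ha2]. apply le_INR in ha1; apply le_INR in ha2. simpl in ha1.
    split.
    + apply Rplus_le_le_0_compat; apply Rmult_le_pos; try lra;
        left; apply Rinv_0_lt_compat; lra.
    + replace ((INR a - 1) / INR n + wleft n u / INR n + wlen n u / INR n)
        with ((INR a - 1 + (wleft n u + wlen n u)) / INR n) by (field; lra).
      apply (Rmult_le_reg_r (INR n)); [lra|].
      unfold Rdiv. rewrite Rmult_assoc, Rinv_l by lra. lra.
Qed.

Lemma in_phi_range n u y : (2 <= n)%nat -> is_word n u -> in_phi n u y -> 0 <= y < 1.
Proof. intros h hw [h1 h2]. pose proof (wleft_bounds n u h hw). lra. Qed.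

Lemma in_phi_dec n u y : {in_phi n u y} + {~ in_phi n u y}.
Proof.
  unfold in_phi. destruct (Rle_dec (wleft n u) y); [|right; tauto].
  destruct (Rlt_dec y (wleft n u + wlen n u)); [left; auto|right; tauto].
Defined.

Definition in_phib n u y : bool := if in_phi_dec n u y then true else false.

Lemma in_phib_true n u y : in_phib n u y = true <-> in_phi n u y.
Proof. unfold in_phib. destruct (in_phi_dec n u y); split; intro; auto; discriminate. Qed.

Definition coord n a z := (z - wleft n a) / wlen n a.

Lemma in_phi_coord n a z : (2 <= n)%nat -> (in_phi n a z <-> 0 <= coord n a z < 1).
Proof.
  intro h. pose proof (wlen_pos n a h). unfold in_phi, coord.
  split; intros [h1 h2]; split.
  - apply Rmult_le_pos; [lra|left; apply Rinv_0_lt_compat; lra].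
  - apply (Rmult_lt_reg_r (wlen n a)); [lra|]. unfold Rdiv.
    rewrite Rmult_assoc, Rinv_l by lra. lra.
  - apply (Rmult_le_compat_r (wlen n a)) in h1; [|lra]. unfold Rdiv in h1.
    rewrite Rmult_assoc, Rinv_l in h1 by lra. lra.
  - apply (Rmult_lt_compat_r (wlen n a)) in h2; [|lra]. unfold Rdiv in h2.
    rewrite Rmult_assoc, Rinv_l in h2 by lra. lra.
Qed.

Lemma coord_eq n a z : (2 <= n)%nat -> z = wleft n a + coord n a z * wlen n a.
Proof. intro h. pose proof (wlen_pos n a h). unfold coord. field. lra. Qed.

Lemma coord_app n u w y : (2 <= n)%nat -> coord n (u ++ w) y = coord n w (coord n u y).
Proof.
  intro h. pose proof (wlen_pos n u h). pose proof (wlen_pos n w h).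
  unfold coord. rewrite wleft_app, wlen_app by auto. field. lra.
Qed.

Lemma in_phi_app n u w y : (2 <= n)%nat -> (in_phi n (u ++ w) y <-> in_phi n w (coord n u y)).
Proof. intro h. rewrite !in_phi_coord, coord_app by auto. tauto. Qed.

Lemma in_phi_app_l n u w y : (2 <= n)%nat -> is_word n w -> in_phi n (u ++ w) y -> in_phi n u y.
Proof.
  intros h hw H. apply in_phi_app in H; auto. apply in_phi_coord; auto.
  apply (in_phi_range n w); auto.
Qed.

Definition digit (n : nat) (y : R) : nat := S (Z.to_nat (Int_part (INR n * y))).

Lemma fmap_range n y : 0 <= fmap n y < 1.
Proof. unfold fmap. pose proof (base_fp (INR n * y)). lra. Qed.

Lemma digit_spec n y : (2 <= n)%nat -> 0 <= y < 1 ->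
  (1 <= digit n y <= n)%nat /\ fmap n y = INR n * y - (INR (digit n y) - 1).
Proof.
  intros h hy. pose proof (nR_ge2 n h) as hn.
  pose proof (base_Int_part (INR n * y)) as [b1 b2].
  set (z := Int_part (INR n * y)) in *.
  assert (hz0 : (0 <= z)%Z).
  { assert (IZR z > -1) by nra. assert (-1 < z)%Z by (apply lt_IZR; simpl; lra). lia. }
  assert (hzr : IZR z = INR (Z.to_nat z)) by (rewrite INR_IZR_INZ, Z2Nat.id by lia; reflexivity).
  unfold digit. fold z. split.
  - split; [lia|]. assert (INR (Z.to_nat z) < INR n) by nra. apply INR_lt in H. lia.
  - unfold fmap, frac_part. fold z. rewrite S_INR. lra.
Qed.

Lemma in_phi_cons n a u y : (2 <= n)%nat ->
  in_phi n (a :: u) y <-> in_phi n u (INR n * y - (INR a - 1)).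
Proof.
  intro h. pose proof (nR_ge2 n h) as hn.
  change (a :: u) with ([a] ++ u). rewrite in_phi_app by exact h.
  replace (coord n [a] y) with (INR n * y - (INR a - 1)); [tauto|].
  unfold coord. rewrite wleft_cons, wlen_cons, wlen_nil. simpl. field. lra.
Qed.

Lemma in_phi_digit n a u y : (2 <= n)%nat -> is_word n u -> (1 <= a <= n)%nat ->
  (in_phi n (a :: u) y <-> (0 <= y < 1 /\ a = digit n y /\ in_phi n u (fmap n y))).
Proof.
  intros h hw ha. pose proof (nR_ge2 n h) as hn. split.
  - intro H. assert (hy : 0 <= y < 1) by (apply (in_phi_range n (a :: u) y h); auto; constructor; auto).
    rewrite in_phi_cons in H by exact h.
    pose proof (in_phi_range n u _ h hw H) as hr.
    destruct (Int_part_frac_part_spec (INR n * y) (Z.of_nat (a - 1)) (INR n * y - (INR a - 1)) hr)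
      as [e1 e2].
    { rewrite <- INR_IZR_INZ, minus_INR by lia. simpl. lra. }
    split; [exact hy|]. split.
    + unfold digit. rewrite <- e1. rewrite Nat2Z.id. lia.
    + unfold fmap. rewrite <- e2. exact H.
  - intros [hy [-> H]]. rewrite in_phi_cons by exact h.
    destruct (digit_spec n y h hy) as [_ hf]. rewrite <- hf. exact H.
Qed.

Definition digit_seq (n : nat) (y : R) : nat -> nat := fun k => digit n (Nat.iter k (fmap n) y).

Lemma digit_seq_range n y : (2 <= n)%nat -> 0 <= y < 1 -> forall k, (1 <= digit_seq n y k <= n)%nat.
Proof.
  intros h hy k. unfold digit_seq. apply digit_spec; auto.
  destruct k; simpl; [exact hy|apply fmap_range].
Qed.

Lemma digit_seq_shift n y k : digit_seq n y (S k) = digit_seq n (fmap n y) k.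
Proof. unfold digit_seq. rewrite Nat.iter_succ_r. reflexivity. Qed.

Lemma in_phi_prefix n u : (2 <= n)%nat -> is_word n u ->
  forall y, 0 <= y < 1 -> (in_phi n u y <-> is_prefix u (digit_seq n y)).
Proof.
  intro h. induction u as [|a u IH]; intros hw y hy.
  - split; intro H.
    + intros k hk; simpl in hk; lia.
    + unfold in_phi. simpl. rewrite wlen_nil. lra.
  - inversion hw as [|? ? ha hu]; subst.
    rewrite in_phi_digit by auto. split.
    + intros [_ [ea Hu]] k hk. destruct k.
      * simpl. unfold digit_seq. simpl. auto.
      * simpl. rewrite digit_seq_shift.
        apply (IH hu (fmap n y) (fmap_range n y)); auto. simpl in hk; lia.
    + intro H. split; [exact hy|]. split.
      * specialize (H 0%nat). simpl in H. unfold digit_seq in H; simpl in H.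
        symmetry; apply H; lia.
      * apply IH; auto; [apply fmap_range|]. intros k hk.
        rewrite <- digit_seq_shift. apply (H (S k)). simpl; lia.
Qed.

Lemma adm_words n L u : admissible n L -> In u L -> is_word n u.
Proof. intros [_ [hw _]] h. rewrite Forall_forall in hw. auto. Qed.

Lemma adm_cover n L y : (2 <= n)%nat -> admissible n L -> 0 <= y < 1 ->
  exists u, In u L /\ in_phi n u y.
Proof.
  intros h hL hy. pose proof hL as [_ [hw hu]].
  destruct (hu (digit_seq n y) (digit_seq_range n y h hy)) as [u [hin [hp _]]].
  exists u. split; auto. apply in_phi_prefix; auto. apply (adm_words n L); auto.
Qed.

Lemma adm_unique n L y u u' : (2 <= n)%nat -> admissible n L -> In u L -> In u' L ->
  in_phi n u y -> in_phi n u' y -> u = u'.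
Proof.
  intros h hL i1 i2 p1 p2. pose proof hL as [_ [_ hu]].
  assert (hy : 0 <= y < 1) by (apply (in_phi_range n u y h); auto; apply (adm_words n L); auto).
  destruct (hu (digit_seq n y) (digit_seq_range n y h hy)) as [v [hin [hp huniq]]].
  rewrite (huniq u), (huniq u'); auto; apply in_phi_prefix; auto; apply (adm_words n L); auto.
Qed.

Lemma prefix_comparable (b c : word) (s : nat -> nat) : is_prefix b s -> is_prefix c s ->
  (exists w, c = b ++ w) \/ (exists w, b = c ++ w).
Proof.
  revert c s. induction b as [|x b IH]; intros c s hb hc.
  - left. exists c. reflexivity.
  - destruct c as [|y c].
    + right. exists (x :: b). reflexivity.
    + assert (x = y).
      { pose proof (hb 0%nat ltac:(simpl; lia)) as e1.
        pose proof (hc 0%nat ltac:(simpl; lia)) as e2. simpl in e1, e2. congruence. }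
      subst y.
      destruct (IH c (fun k => s (S k))) as [[w e]|[w e]].
      * intros k hk. apply (hb (S k)). simpl; lia.
      * intros k hk. apply (hc (S k)). simpl; lia.
      * left. exists w. rewrite e. reflexivity.
      * right. exists w. rewrite e. reflexivity.
Qed.

Definition disjw n (p q : word) : Prop := forall z, in_phi n p z -> in_phi n q z -> False.

Lemma word_trichotomy n b c : (2 <= n)%nat -> is_word n b -> is_word n c ->
  (exists w, b = c ++ w) \/ (exists w, c = b ++ w) \/ disjw n b c.
Proof.
  intros h hb hc. destruct (classic (exists w, b = c ++ w)) as [H|H]; [left; auto|].
  destruct (classic (exists w, c = b ++ w)) as [H'|H']; [right; left; auto|].
  right; right. intros p p1 p2. pose proof (in_phi_range n b p h hb p1) as hp.
  apply in_phi_prefix in p1; auto. apply in_phi_prefix in p2; auto.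
  destruct (prefix_comparable b c _ p1 p2); tauto.
Qed.

(** ** Affine maps between cylinders and the orbit of x *)

Definition phimap (n : nat) (a b : word) (z : R) : R :=
  wleft n b + (z - wleft n a) * (wlen n b / wlen n a).

Lemma coord_phimap n a b z : (2 <= n)%nat -> coord n b (phimap n a b z) = coord n a z.
Proof.
  intro h. pose proof (wlen_pos n a h). pose proof (wlen_pos n b h).
  unfold coord, phimap. field. lra.
Qed.

Lemma phimap_in n a b z : (2 <= n)%nat -> (in_phi n b (phimap n a b z) <-> in_phi n a z).
Proof. intro h. rewrite !in_phi_coord, coord_phimap by exact h. tauto. Qed.

Lemma phimap_inv n a b z : (2 <= n)%nat -> phimap n b a (phimap n a b z) = z.
Proof.
  intro h. pose proof (wlen_pos n a h). pose proof (wlen_pos n b h).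
  unfold phimap. field. lra.
Qed.

Lemma phimap_injective n a b : (2 <= n)%nat -> Injective (phimap n a b).
Proof.
  intros h z z' e. rewrite <- (phimap_inv n a b z h), <- (phimap_inv n a b z' h), e.
  reflexivity.
Qed.

Lemma phimap_app n a b w z : (2 <= n)%nat -> phimap n (a ++ w) (b ++ w) z = phimap n a b z.
Proof.
  intro h. pose proof (wlen_pos n a h). pose proof (wlen_pos n b h). pose proof (wlen_pos n w h).
  unfold phimap. rewrite !wleft_app, !wlen_app by auto. field. lra.
Qed.

Lemma frac_nat_plus (k : nat) s : 0 <= s < 1 -> frac_part (INR k + s) = s.
Proof.
  intro hs. destruct (Int_part_frac_part_spec (INR k + s) (Z.of_nat k) s hs) as [_ e]; auto.
  rewrite <- INR_IZR_INZ. reflexivity.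
Qed.

Lemma fiter_cyl n u t : (2 <= n)%nat -> is_word n u -> 0 <= t < 1 ->
  Nat.iter (length u) (fmap n) (wleft n u + t * wlen n u) = t.
Proof.
  intros h hw ht. pose proof (nR_ge2 n h) as hn. induction u as [|a u IH].
  - simpl. rewrite wlen_nil. ring.
  - inversion hw as [|? ? ha hu]; subst. simpl length. rewrite Nat.iter_succ_r.
    pose proof (wleft_bounds n u h hu) as [b1 b2].
    replace (fmap n (wleft n (a :: u) + t * wlen n (a :: u))) with (wleft n u + t * wlen n u).
    { apply IH; auto. }
    unfold fmap. rewrite wleft_cons, wlen_cons.
    replace (INR n * ((INR a - 1) / INR n + wleft n u / INR n + t * (wlen n u / INR n)))
      with (INR (a - 1) + (wleft n u + t * wlen n u)).
    2:{ rewrite minus_INR by lia. simpl. field. lra. }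
    symmetry. apply frac_nat_plus. pose proof (wlen_pos n u h). nra.
Qed.

Lemma orb_step n x y z p q : orb n x y -> 0 <= z < 1 ->
  Nat.iter p (fmap n) z = Nat.iter q (fmap n) y -> orb n x z.
Proof.
  intros [hy [p' [q' e]]] hz e2. split; auto. exists (p' + p)%nat, (q + q')%nat.
  rewrite !Nat.iter_add, e2, <- Nat.iter_add, Nat.add_comm, Nat.iter_add, e. reflexivity.
Qed.

(** The maps between cylinders preserve orb(x): z and phimap z have a common f-iterate. *)
Lemma orb_phimap n x a b z : (2 <= n)%nat -> is_word n a -> is_word n b ->
  in_phi n a z -> orb n x z -> orb n x (phimap n a b z).
Proof.
  intros h ha hb hz ho. pose proof (proj1 (in_phi_coord n a z h) hz) as hc.
  apply (orb_step n x z _ (length b) (length a) ho).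
  - apply (in_phi_range n b _ h hb). apply phimap_in; auto.
  - rewrite (coord_eq n a z h) at 2.
    rewrite (coord_eq n b (phimap n a b z) h), coord_phimap by auto.
    rewrite !fiter_cyl; auto.
Qed.

(** ** Matrix units M_{a,b} = S_a S_b^* *)

Definition Mop (n : nat) (a b : word) : op := fun v z =>
  if in_phi_dec n a z then v (phimap n a b z) else RtoC 0.

Lemma Mop_comp_extend_right n a c d w : (2 <= n)%nat -> is_word n w ->
  op_comp (Mop n a (c ++ w)) (Mop n c d) = Mop n a (d ++ w).
Proof.
  intros h hw. pose proof (wlen_pos n a h). pose proof (wlen_pos n c h).
  pose proof (wlen_pos n d h). pose proof (wlen_pos n w h).
  apply functional_extensionality; intro v. apply functional_extensionality; intro z.
  unfold op_comp, Mop. destruct (in_phi_dec n a z) as [i|i]; auto.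
  destruct (in_phi_dec n c (phimap n a (c ++ w) z)) as [j|j].
  - f_equal. unfold phimap. rewrite !wleft_app, !wlen_app by auto. field. lra.
  - exfalso. apply j. apply (in_phi_app_l n c w); auto. apply phimap_in; auto.
Qed.

Lemma Mop_comp_extend_left n a b d w : (2 <= n)%nat -> is_word n w ->
  op_comp (Mop n a b) (Mop n (b ++ w) d) = Mop n (a ++ w) d.
Proof.
  intros h hw. pose proof (wlen_pos n a h). pose proof (wlen_pos n b h).
  pose proof (wlen_pos n d h). pose proof (wlen_pos n w h).
  apply functional_extensionality; intro v. apply functional_extensionality; intro z.
  unfold op_comp, Mop.
  assert (E : in_phi n (b ++ w) (phimap n a b z) <-> in_phi n (a ++ w) z)
    by (rewrite !in_phi_app, coord_phimap by auto; tauto).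
  destruct (in_phi_dec n a z) as [i|i]; destruct (in_phi_dec n (a ++ w) z) as [k|k].
  - destruct (in_phi_dec n (b ++ w) (phimap n a b z)) as [j|j]; [|tauto].
    f_equal. unfold phimap. rewrite !wleft_app, !wlen_app by auto. field. lra.
  - destruct (in_phi_dec n (b ++ w) (phimap n a b z)) as [j|j]; tauto.
  - exfalso. apply i. apply (in_phi_app_l n a w); auto.
  - reflexivity.
Qed.

Lemma Mop_comp_disjoint n a b c d : (2 <= n)%nat -> disjw n b c ->
  op_comp (Mop n a b) (Mop n c d) = op_zero.
Proof.
  intros h hd. apply functional_extensionality; intro v. apply functional_extensionality; intro z.
  unfold op_comp, Mop, op_zero. destruct (in_phi_dec n a z) as [i|i]; auto.
  destruct (in_phi_dec n c (phimap n a b z)) as [j|j]; auto.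
  exfalso. apply (hd (phimap n a b z)); auto. apply phimap_in; auto.
Qed.

Lemma Sop_Mop n i : (2 <= n)%nat -> Sop n i = Mop n [i] [].
Proof.
  intro h. pose proof (nR_ge2 n h).
  assert (wl : wleft n [i] = (INR i - 1) / INR n) by (rewrite wleft_cons; simpl; field; lra).
  assert (wr : wleft n [i] + wlen n [i] = INR i / INR n)
    by (rewrite wleft_cons, wlen_cons, wlen_nil; simpl; field; lra).
  apply functional_extensionality; intro v. apply functional_extensionality; intro z.
  unfold Sop, Mop. destruct (in_phi_dec n [i] z) as [[p1 p2]|np];
  destruct (Rle_dec ((INR i - 1) / INR n) z); destruct (Rlt_dec z (INR i / INR n));
  try reflexivity; try (exfalso; lra); try (exfalso; apply np; split; lra).
  f_equal. unfold phimap. rewrite wl, wlen_cons, wlen_nil. simpl. field. lra.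
Qed.

(** ** Finite sums of squares and the norm bounds NormLe *)

Lemma lsumR_app F l1 l2 : lsumR F (l1 ++ l2) = lsumR F l1 + lsumR F l2.
Proof. induction l1; simpl; [ring|rewrite IHl1; ring]. Qed.

Lemma lsumR_nonneg F l : (forall y, In y l -> 0 <= F y) -> 0 <= lsumR F l.
Proof.
  induction l; simpl; intros H; [lra|].
  pose proof (H a (or_introl eq_refl)). assert (0 <= lsumR F l) by (apply IHl; auto). lra.
Qed.

Lemma lsumR_le F G l : (forall y, In y l -> F y <= G y) -> lsumR F l <= lsumR G l.
Proof.
  induction l; simpl; intros H; [lra|].
  pose proof (H a (or_introl eq_refl)). assert (lsumR F l <= lsumR G l) by (apply IHl; auto). lra.
Qed.

Lemma lsumR_ext F G l : (forall y, In y l -> F y = G y) -> lsumR F l = lsumR G l.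
Proof. induction l; simpl; intros H; [lra|]. rewrite H, IHl by auto. reflexivity. Qed.

Lemma lsumR_plus F G l : lsumR (fun y => F y + G y) l = lsumR F l + lsumR G l.
Proof. induction l; simpl; [ring|rewrite IHl; ring]. Qed.

Lemma lsumR_scal c F l : lsumR (fun y => c * F y) l = c * lsumR F l.
Proof. induction l; simpl; [ring|rewrite IHl; ring]. Qed.

Lemma lsumR_if (p : R -> bool) F l :
  lsumR (fun z => if p z then F z else 0) l = lsumR F (filter p l).
Proof. induction l; simpl; auto. destruct (p a); simpl; rewrite IHl; ring. Qed.

Lemma lsumR_map F f l : lsumR F (map f l) = lsumR (fun y => F (f y)) l.
Proof. induction l; simpl; auto. rewrite IHl; auto. Qed.

Lemma lsumR_zero F l : (forall y, In y l -> F y = 0) -> lsumR F l = 0.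
Proof. intro H. rewrite (lsumR_ext F (fun _ => 0)) by auto. clear. induction l; simpl; lra. Qed.

Lemma lsumR_incl F l1 l2 : NoDup l1 -> NoDup l2 -> incl l1 l2 ->
  (forall y, In y l2 -> 0 <= F y) -> lsumR F l1 <= lsumR F l2.
Proof.
  revert l2. induction l1 as [|a l1 IH]; intros l2 h1 h2 hi hF.
  - simpl. apply lsumR_nonneg; auto.
  - inversion h1; subst. assert (ha : In a l2) by (apply hi; left; auto).
    destruct (in_split a l2 ha) as [p [q ->]].
    rewrite lsumR_app. simpl.
    assert (lsumR F l1 <= lsumR F (p ++ q)).
    { apply IH; auto.
      - apply NoDup_remove_1 in h2; auto.
      - intros y hy. assert (In y (p ++ a :: q)) by (apply hi; right; auto).
        apply in_app_or in H. apply in_or_app. destruct H as [H|[H|H]]; auto.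
        subst; contradiction.
      - intros y hy. apply hF. apply in_app_or in hy. apply in_or_app. simpl. tauto. }
    rewrite lsumR_app in H. lra.
Qed.

Lemma lsumR_zero_terms F l : (forall y, In y l -> 0 <= F y) -> lsumR F l <= 0 ->
  forall y, In y l -> F y = 0.
Proof.
  induction l; simpl; intros hF hs y hy; [contradiction|].
  assert (0 <= F a) by auto. assert (0 <= lsumR F l) by (apply lsumR_nonneg; auto).
  destruct hy as [<-|hy]; [lra|]. apply IHl; auto. lra.
Qed.

Lemma cauchy_schwarz F G l A B : 0 <= A -> 0 <= B ->
  lsumR (fun y => F y ^ 2) l <= A ^ 2 -> lsumR (fun y => G y ^ 2) l <= B ^ 2 ->
  lsumR (fun y => F y * G y) l <= A * B.
Proof.
  intros hA hB h1 h2.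
  destruct (Req_dec A 0) as [eA|eA].
  - subst. rewrite lsumR_zero; [lra|]. intros y hy.
    assert (F y ^ 2 = 0) by (apply (lsumR_zero_terms (fun y => F y ^ 2) l); auto; intros; nra).
    assert (F y = 0) by nra. rewrite H0; ring.
  - destruct (Req_dec B 0) as [eB|eB].
    + subst. rewrite lsumR_zero; [lra|]. intros y hy.
      assert (G y ^ 2 = 0) by (apply (lsumR_zero_terms (fun y => G y ^ 2) l); auto; intros; nra).
      assert (G y = 0) by nra. rewrite H0; ring.
    + assert (hAB : 0 < A * B) by nra.
      assert (2 * (A * B) * lsumR (fun y => F y * G y) l <=
              B ^ 2 * lsumR (fun y => F y ^ 2) l + A ^ 2 * lsumR (fun y => G y ^ 2) l).
      { rewrite <- !lsumR_scal, <- lsumR_plus. apply lsumR_le. intros y _.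
        assert (0 <= (B * F y - A * G y) ^ 2) by apply pow2_ge_0. nra. }
      assert (B ^ 2 * lsumR (fun y => F y ^ 2) l <= B ^ 2 * A ^ 2)
        by (apply Rmult_le_compat_l; nra).
      assert (A ^ 2 * lsumR (fun y => G y ^ 2) l <= A ^ 2 * B ^ 2)
        by (apply Rmult_le_compat_l; nra).
      nra.
Qed.

Lemma Cmod0 : Cmod (RtoC 0) = 0.
Proof. unfold Cmod, RtoC. simpl. rewrite Rmult_0_l, Rplus_0_l, sqrt_0. ring. Qed.

Lemma NormLe_nonneg n x v A : NormLe n x v A -> 0 <= A.
Proof. intros [h _]; auto. Qed.

Lemma NormLe_mono n x v A B : A <= B -> NormLe n x v A -> NormLe n x v B.
Proof.
  intros hAB [hA H]. split; [lra|]. intros l hl. specialize (H l hl).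
  assert (A ^ 2 <= B ^ 2) by nra. lra.
Qed.

Lemma NormLe_add n x u w A B : NormLe n x u A -> NormLe n x w B ->
  NormLe n x (fun z => Cplus (u z) (w z)) (A + B).
Proof.
  intros [hA HA] [hB HB]. split; [lra|]. intros l hl.
  specialize (HA l hl). specialize (HB l hl).
  assert (lsumR (fun y => Cmod (u y) * Cmod (w y)) l <= A * B) by (apply cauchy_schwarz; auto).
  apply Rle_trans with
    (lsumR (fun y => Cmod (u y) ^ 2 + 2 * (Cmod (u y) * Cmod (w y)) + Cmod (w y) ^ 2) l).
  - apply lsumR_le. intros y _. pose proof (Cmod_triangle (u y) (w y)).
    pose proof (Cmod_ge_0 (Cplus (u y) (w y))). pose proof (Cmod_ge_0 (u y)).
    pose proof (Cmod_ge_0 (w y)).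
    assert (Cmod (Cplus (u y) (w y)) ^ 2 <= (Cmod (u y) + Cmod (w y)) ^ 2)
      by (apply pow_incr; lra).
    lra.
  - rewrite !lsumR_plus, lsumR_scal. nra.
Qed.

Lemma NormLe_scal n x c u A : NormLe n x u A -> NormLe n x (fun z => Cmult c (u z)) (Cmod c * A).
Proof.
  intros [hA HA]. pose proof (Cmod_ge_0 c). split; [nra|]. intros l hl. specialize (HA l hl).
  rewrite (lsumR_ext _ (fun y => Cmod c ^ 2 * Cmod (u y) ^ 2)).
  - rewrite lsumR_scal. replace ((Cmod c * A) ^ 2) with (Cmod c ^ 2 * A ^ 2) by ring.
    apply Rmult_le_compat_l; [nra|auto].
  - intros y _. rewrite Cmod_mult. ring.
Qed.

Lemma NormLe_zero n x : NormLe n x (fun _ => RtoC 0) 0.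
Proof.
  split; [lra|]. intros l _. rewrite lsumR_zero; [lra|]. intros. rewrite Cmod0. ring.
Qed.

Lemma NormLe_ext n x u w A : (forall z, orb n x z -> u z = w z) ->
  NormLe n x u A -> NormLe n x w A.
Proof.
  intros e [hA H]. split; auto. intros l hl.
  rewrite <- (lsumR_ext (fun y => Cmod (u y) ^ 2)); auto.
  intros y hy. rewrite e; auto. destruct hl as [_ hf]. rewrite Forall_forall in hf. auto.
Qed.

(** Matrix units are contractions: they only move values along an injective map of orb(x). *)
Lemma Mop_norm n x a b v A : (2 <= n)%nat -> is_word n a -> is_word n b ->
  NormLe n x v A -> NormLe n x (Mop n a b v) A.
Proof.
  intros h ha hb [hA H]. split; auto. intros l [hnd hl].
  rewrite (lsumR_ext _ (fun z => if in_phib n a z then Cmod (v (phimap n a b z)) ^ 2 else 0)).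
  2:{ intros z _. unfold Mop, in_phib. destruct (in_phi_dec n a z); auto. rewrite Cmod0. ring. }
  rewrite lsumR_if, <- (lsumR_map (fun y => Cmod (v y) ^ 2)). apply H. split.
  - apply Injective_map_NoDup; [apply phimap_injective; auto|apply NoDup_filter; auto].
  - rewrite Forall_forall in *. intros y hy. apply in_map_iff in hy as [z [<- hz]].
    apply filter_In in hz as [hz1 hz2]. apply in_phib_true in hz2. apply orb_phimap; auto.
Qed.

(** ** Vectors of H_x, bounded operators, spans and norm closures *)

Lemma InH_add n x u w : InH n x u -> InH n x w -> InH n x (fun z => Cplus (u z) (w z)).
Proof.
  intros [s1 [A h1]] [s2 [B h2]]. split.
  - intros y hy. rewrite s1, s2 by auto. cring.
  - exists (A + B). apply NormLe_add; auto.
Qed.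

Lemma InH_scal n x c u : InH n x u -> InH n x (fun z => Cmult c (u z)).
Proof.
  intros [s1 [A h1]]. split.
  - intros y hy. rewrite s1 by auto. cring.
  - exists (Cmod c * A). apply NormLe_scal; auto.
Qed.

Lemma InH_sub n x u w : InH n x u -> InH n x w -> InH n x (fun z => Cminus (u z) (w z)).
Proof.
  intros hu hw.
  replace (fun z => Cminus (u z) (w z)) with (fun z => Cplus (u z) (Cmult (RtoC (-1)) (w z))).
  - apply InH_add; auto. apply InH_scal; auto.
  - apply functional_extensionality; intro y. cring.
Qed.

Lemma InH_zero n x : InH n x (fun _ => RtoC 0).
Proof. split; auto. exists 0. apply NormLe_zero. Qed.

Lemma Mop_bounded n x a b : (2 <= n)%nat -> is_word n a -> is_word n b ->
  BoundedOp n x (Mop n a b).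
Proof.
  intros h ha hb. split; [|split; [|split]].
  - intros v [s [A hv]]. split.
    + intros z hz. unfold Mop. destruct (in_phi_dec n a z) as [i|i]; auto.
      apply s. intro ho. apply hz. rewrite <- (phimap_inv n a b z h).
      apply orb_phimap; auto. apply phimap_in; auto.
    + exists A. apply Mop_norm; auto.
  - intros v w _ _. apply functional_extensionality; intro z. unfold Mop.
    destruct (in_phi_dec n a z); auto. cring.
  - intros c v _. apply functional_extensionality; intro z. unfold Mop.
    destruct (in_phi_dec n a z); auto. cring.
  - exists 1. split; [lra|]. intros v c _ hv. rewrite Rmult_1_l. apply Mop_norm; auto.
Qed.

Definition spanop (l : list (C * op)) : op :=
  fold_right (fun p acc => op_add (op_scal (fst p) (snd p)) acc) op_zero l.

Lemma spanop_app l1 l2 : spanop (l1 ++ l2) = op_add (spanop l1) (spanop l2).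
Proof.
  induction l1 as [|p l1 IH]; simpl;
    [|rewrite IH]; apply functional_extensionality; intro v;
    apply functional_extensionality; intro z; unfold op_add, op_scal, op_zero; cring.
Qed.

Lemma spanop_scal c l :
  spanop (map (fun p => (Cmult c (fst p), snd p)) l) = op_scal c (spanop l).
Proof.
  induction l as [|p l IH]; simpl;
    [|rewrite IH]; apply functional_extensionality; intro v;
    apply functional_extensionality; intro z; unfold op_add, op_scal, op_zero; simpl; cring.
Qed.

Lemma Span_add P T U : Span P T -> Span P U -> Span P (op_add T U).
Proof.
  intros [l1 [f1 ->]] [l2 [f2 ->]]. exists (l1 ++ l2). split.
  - apply Forall_app; auto.
  - symmetry. apply spanop_app.
Qed.

Lemma Span_scal P c T : Span P T -> Span P (op_scal c T).
Proof.
  intros [l [f ->]]. exists (map (fun p => (Cmult c (fst p), snd p)) l). split.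
  - rewrite Forall_map. simpl. exact f.
  - symmetry. apply spanop_scal.
Qed.

Lemma Span_zero P : Span P op_zero.
Proof. exists []. split; auto. Qed.

Lemma Span_single P T : P T -> Span P T.
Proof.
  intro H. exists [(RtoC 1, T)]. split; [constructor; auto|].
  simpl. apply functional_extensionality; intro v; apply functional_extensionality; intro z.
  unfold op_add, op_scal, op_zero. cring.
Qed.

Lemma Span_ind (P Q : op -> Prop) : Q op_zero ->
  (forall T U, Q T -> Q U -> Q (op_add T U)) ->
  (forall c T, Q T -> Q (op_scal c T)) -> (forall T, P T -> Q T) ->
  forall T, Span P T -> Q T.
Proof.
  intros h0 hadd hsc hP T [l [f ->]]. induction l as [|p l IH]; simpl; auto.
  inversion f; subst. apply hadd; auto.
Qed.

Lemma OpNormLe_ext n x T U M :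
  (forall v, InH n x v -> forall z, orb n x z -> T v z = U v z) ->
  OpNormLe n x T M -> OpNormLe n x U M.
Proof. intros e [hM H]. split; auto. intros v c hv hc. apply (NormLe_ext n x (T v)); auto. Qed.

Lemma OpNormLe_add n x T U M1 M2 : OpNormLe n x T M1 -> OpNormLe n x U M2 ->
  OpNormLe n x (fun v z => Cplus (T v z) (U v z)) (M1 + M2).
Proof.
  intros [h1 H1] [h2 H2]. split; [lra|]. intros v c hv hc.
  replace ((M1 + M2) * c) with (M1 * c + M2 * c) by ring. apply NormLe_add; auto.
Qed.

Lemma OpNormLe_scal n x a T M : OpNormLe n x T M ->
  OpNormLe n x (fun v z => Cmult a (T v z)) (Cmod a * M).
Proof.
  intros [h1 H1]. pose proof (Cmod_ge_0 a). split; [nra|]. intros v c hv hc.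
  rewrite Rmult_assoc. apply NormLe_scal; auto.
Qed.

Lemma OpNormLe_zero n x : OpNormLe n x op_zero 0.
Proof. split; [lra|]. intros v c _ _. rewrite Rmult_0_l. apply NormLe_zero. Qed.

Lemma Bounded_add n x T U : BoundedOp n x T -> BoundedOp n x U -> BoundedOp n x (op_add T U).
Proof.
  intros [i1 [a1 [s1 [M1 n1]]]] [i2 [a2 [s2 [M2 n2]]]]. unfold op_add.
  split; [|split; [|split]].
  - intros v hv. apply InH_add; auto.
  - intros v w hv hw. rewrite a1, a2 by auto. apply functional_extensionality; intro z. cring.
  - intros c v hv. rewrite s1, s2 by auto. apply functional_extensionality; intro z. cring.
  - exists (M1 + M2). apply OpNormLe_add; auto.
Qed.

Lemma Bounded_scal n x c T : BoundedOp n x T -> BoundedOp n x (op_scal c T).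
Proof.
  intros [i1 [a1 [s1 [M1 n1]]]]. unfold op_scal. split; [|split; [|split]].
  - intros v hv. apply InH_scal; auto.
  - intros v w hv hw. rewrite a1 by auto. apply functional_extensionality; intro z. cring.
  - intros d v hv. rewrite s1 by auto. apply functional_extensionality; intro z. cring.
  - exists (Cmod c * M1). apply OpNormLe_scal; auto.
Qed.

Lemma Bounded_zero n x : BoundedOp n x op_zero.
Proof.
  unfold op_zero. split; [|split; [|split]].
  - intros; apply InH_zero.
  - intros. apply functional_extensionality; intro z. cring.
  - intros. apply functional_extensionality; intro z. cring.
  - exists 0. apply OpNormLe_zero.
Qed.

Lemma Bounded_comp n x T U : BoundedOp n x T -> BoundedOp n x U -> BoundedOp n x (op_comp T U).
Proof.
  intros [i1 [a1 [s1 [M1 n1]]]] [i2 [a2 [s2 [M2 n2]]]]. unfold op_comp.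
  split; [|split; [|split]].
  - intros v hv. auto.
  - intros v w hv hw. rewrite a2, a1 by auto. reflexivity.
  - intros c v hv. rewrite s2, s1 by auto. reflexivity.
  - exists (M1 * M2). destruct n1 as [h1 H1], n2 as [h2 H2]. split; [nra|].
    intros v c hv hc. rewrite Rmult_assoc. apply H1; auto.
Qed.

Lemma Bounded_span n x P T : (forall A, P A -> BoundedOp n x A) -> Span P T -> BoundedOp n x T.
Proof.
  intros H. apply Span_ind.
  - apply Bounded_zero.
  - intros; apply Bounded_add; auto.
  - intros; apply Bounded_scal; auto.
  - exact H.
Qed.

Lemma Bounded_lin_sub n x A v w : BoundedOp n x A -> InH n x v -> InH n x w ->
  forall z, Cminus (A v z) (A w z) = A (fun y => Cminus (v y) (w y)) z.
Proof.
  intros [hi [ha [hs _]]] hv hw z.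
  assert (hw' : InH n x (fun y => Cmult (RtoC (-1)) (w y))) by (apply InH_scal; auto).
  replace (fun y => Cminus (v y) (w y)) with (fun y => Cplus (v y) (Cmult (RtoC (-1)) (w y))).
  2:{ apply functional_extensionality; intro y. cring. }
  rewrite ha, hs by auto. cring.
Qed.

Lemma Closure_self n x (P : op -> Prop) T : P T -> Closure n x P T.
Proof.
  intros hT eps he. exists T. split; auto. exists 0. split; auto.
  eapply OpNormLe_ext; [|apply OpNormLe_zero]. intros v _ z _. unfold op_zero. cring.
Qed.

Lemma Closure_mono n x (P Q : op -> Prop) T : (forall A, P A -> Q A) ->
  Closure n x P T -> Closure n x Q T.
Proof. intros H hc eps he. destruct (hc eps he) as [A [hA hM]]. exists A; split; auto. Qed.

Lemma Closure_trans n x (P Q : op -> Prop) T : (forall A, Q A -> Closure n x P A) ->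
  Closure n x Q T -> Closure n x P T.
Proof.
  intros hQ hT eps he.
  destruct (hT (eps/2) ltac:(lra)) as [B [hB [M1 [hM1 n1]]]].
  destruct (hQ B hB (eps/2) ltac:(lra)) as [C' [hC [M2 [hM2 n2]]]].
  exists C'. split; auto. exists (M1 + M2). split; [lra|].
  eapply OpNormLe_ext; [|apply (OpNormLe_add n x _ _ _ _ n1 n2)].
  intros v _ z _. cring.
Qed.

Lemma Closure_add n x P T U : (forall A B, P A -> P B -> P (op_add A B)) ->
  Closure n x P T -> Closure n x P U -> Closure n x P (op_add T U).
Proof.
  intros hP hT hU eps he.
  destruct (hT (eps/2) ltac:(lra)) as [A [hA [M1 [hM1 n1]]]].
  destruct (hU (eps/2) ltac:(lra)) as [B [hB [M2 [hM2 n2]]]].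
  exists (op_add A B). split; auto. exists (M1 + M2). split; [lra|].
  eapply OpNormLe_ext; [|apply (OpNormLe_add n x _ _ _ _ n1 n2)].
  intros v _ z _. unfold op_add. cring.
Qed.

Lemma scaled_small c M eps : 0 <= c -> 0 <= M -> 0 < eps -> M <= eps / (c + 1) -> c * M < eps.
Proof.
  intros hc hM he hMe.
  assert (c * M <= c * (eps / (c + 1))) by (apply Rmult_le_compat_l; lra).
  assert (c * (eps / (c + 1)) < eps).
  { apply (Rmult_lt_reg_r (c + 1)); [lra|]. unfold Rdiv.
    replace (c * (eps * / (c + 1)) * (c + 1)) with (c * eps) by (field; lra). nra. }
  lra.
Qed.

Lemma Closure_scal n x P c T : (forall A, P A -> P (op_scal c A)) ->
  Closure n x P T -> Closure n x P (op_scal c T).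
Proof.
  intros hP hT eps he. pose proof (Cmod_ge_0 c).
  destruct (hT (eps / (Cmod c + 1))) as [A [hA [M [hM nM]]]]; [apply Rdiv_lt_0_compat; lra|].
  exists (op_scal c A). split; auto. exists (Cmod c * M). split.
  - apply scaled_small; try lra. apply nM.
  - eapply OpNormLe_ext; [|apply (OpNormLe_scal n x c _ _ nM)].
    intros v _ z _. unfold op_scal. cring.
Qed.

Lemma Closure_span n x P T : Span (Closure n x (Span P)) T -> Closure n x (Span P) T.
Proof.
  apply Span_ind.
  - apply Closure_self, Span_zero.
  - intros; apply Closure_add; auto. intros; apply Span_add; auto.
  - intros; apply Closure_scal; auto. intros; apply Span_scal; auto.
  - auto.
Qed.

(** ** Unconditional sums over orb(x) and adjoints of matrix units *)

Definition in_listb (l : list R) (z : R) : bool := if in_dec Req_EM_T z l then true else false.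

Lemma in_listb_true l z : in_listb l z = true <-> In z l.
Proof. unfold in_listb. destruct (in_dec Req_EM_T z l); split; intro; auto; discriminate. Qed.

Lemma in_listb_false l z : in_listb l z = false <-> ~ In z l.
Proof.
  unfold in_listb. destruct (in_dec Req_EM_T z l); split; intro; auto; try discriminate; tauto.
Qed.

Lemma lsumC_app F l1 l2 : lsumC F (l1 ++ l2) = Cplus (lsumC F l1) (lsumC F l2).
Proof. induction l1; simpl; [|rewrite IHl1]; cring. Qed.

Lemma lsumC_perm F l1 l2 : Permutation l1 l2 -> lsumC F l1 = lsumC F l2.
Proof. induction 1; simpl; auto. - rewrite IHPermutation; auto. - cring. - congruence. Qed.

Lemma lsumC_zero F l : (forall z, In z l -> F z = RtoC 0) -> lsumC F l = RtoC 0.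
Proof. induction l; simpl; intros H; auto. rewrite H, IHl by auto. cring. Qed.

Lemma lsumC_ext F G l : (forall y, In y l -> F y = G y) -> lsumC F l = lsumC G l.
Proof. induction l; simpl; intros H; auto. rewrite H, IHl by auto. reflexivity. Qed.

Lemma lsumC_plus F G l :
  lsumC (fun y => Cplus (F y) (G y)) l = Cplus (lsumC F l) (lsumC G l).
Proof. induction l; simpl; [|rewrite IHl]; cring. Qed.

Lemma lsumC_scal a F l : lsumC (fun y => Cmult a (F y)) l = Cmult a (lsumC F l).
Proof. induction l; simpl; [|rewrite IHl]; cring. Qed.

Lemma lsumC_split F l (p : R -> bool) :
  lsumC F l = Cplus (lsumC F (filter p l)) (lsumC F (filter (fun z => negb (p z)) l)).
Proof. induction l; simpl; [cring|]. destruct (p a); simpl; rewrite IHl; cring. Qed.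

Lemma lsumC_map F f l : lsumC F (map f l) = lsumC (fun y => F (f y)) l.
Proof. induction l; simpl; auto. rewrite IHl; auto. Qed.

Lemma lsumC_RtoC F l : lsumC (fun y => RtoC (F y)) l = RtoC (lsumR F l).
Proof. induction l; simpl; auto. rewrite IHl. cring. Qed.

Lemma Cmod_lsumC F l : Cmod (lsumC F l) <= lsumR (fun y => Cmod (F y)) l.
Proof.
  induction l; simpl.
  - rewrite Cmod0. lra.
  - eapply Rle_trans; [apply Cmod_triangle|]. lra.
Qed.

Definition lunion (l0 l1 : list R) := l0 ++ filter (fun z => negb (in_listb l0 z)) l1.

Lemma lunion_finsub n x l0 l1 : finsub n x l0 -> finsub n x l1 -> finsub n x (lunion l0 l1).
Proof.
  intros [h0 f0] [h1 f1]. unfold lunion. split.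
  - apply NoDup_app; auto.
    + apply NoDup_filter; auto.
    + intros z i1 i2. apply filter_In in i2 as [_ e].
      apply Bool.negb_true_iff, in_listb_false in e. auto.
  - apply Forall_app; split; auto. rewrite Forall_forall in *. intros z hz.
    apply filter_In in hz. apply f1; tauto.
Qed.

Lemma lunion_incl_l l0 l1 : incl l0 (lunion l0 l1).
Proof. intros z h. apply in_or_app; auto. Qed.

Lemma lunion_incl_r l0 l1 : incl l1 (lunion l0 l1).
Proof.
  intros z h. unfold lunion. destruct (in_dec Req_EM_T z l0); apply in_or_app; auto.
  right. apply filter_In. split; auto. apply Bool.negb_true_iff, in_listb_false; auto.
Qed.

Lemma sum_restrict F l l' : NoDup l -> NoDup l' -> incl l l' ->
  (forall z, In z l' -> ~ In z l -> F z = RtoC 0) -> lsumC F l' = lsumC F l.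
Proof.
  intros h1 h2 hi hz. rewrite (lsumC_split F l' (in_listb l)).
  rewrite (lsumC_zero F (filter (fun z => negb (in_listb l z)) l')).
  2:{ intros z hz'. apply filter_In in hz' as [a b].
      apply Bool.negb_true_iff, in_listb_false in b. auto. }
  rewrite (lsumC_perm F (filter (in_listb l) l') l); [cring|].
  apply NoDup_Permutation; auto; [apply NoDup_filter; auto|].
  intro z. rewrite filter_In, in_listb_true. split; [tauto|]. intro; split; auto.
Qed.

Lemma HasSum_fin n x F l : finsub n x l -> (forall z, orb n x z -> ~ In z l -> F z = RtoC 0) ->
  HasSum n x F (lsumC F l).
Proof.
  intros hl hF eps he. exists l. split; auto. intros l' hl' hi.
  rewrite (sum_restrict F l l'); auto.
  - replace (Cminus (lsumC F l) (lsumC F l)) with (RtoC 0) by cring. rewrite Cmod0. auto.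
  - apply hl.
  - apply hl'.
  - intros z h1 h2. apply hF; auto. destruct hl' as [_ f]. rewrite Forall_forall in f; auto.
Qed.

Lemma HasSum_zero n x F : (forall z, orb n x z -> F z = RtoC 0) -> HasSum n x F (RtoC 0).
Proof.
  intro hF. replace (RtoC 0) with (lsumC F []) by reflexivity.
  apply HasSum_fin; [split; constructor|intros; auto].
Qed.

Lemma HasSum_add n x F G c1 c2 : HasSum n x F c1 -> HasSum n x G c2 ->
  HasSum n x (fun z => Cplus (F z) (G z)) (Cplus c1 c2).
Proof.
  intros h1 h2 eps he.
  destruct (h1 (eps/2) ltac:(lra)) as [l1 [f1 H1]].
  destruct (h2 (eps/2) ltac:(lra)) as [l2 [f2 H2]].
  exists (lunion l1 l2). split; [apply lunion_finsub; auto|]. intros l hl hi.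
  specialize (H1 l hl (fun z h => hi z (lunion_incl_l l1 l2 z h))).
  specialize (H2 l hl (fun z h => hi z (lunion_incl_r l1 l2 z h))).
  rewrite lsumC_plus.
  replace (Cminus (Cplus (lsumC F l) (lsumC G l)) (Cplus c1 c2))
    with (Cplus (Cminus (lsumC F l) c1) (Cminus (lsumC G l) c2)) by cring.
  eapply Rle_lt_trans; [apply Cmod_triangle|]. lra.
Qed.

Lemma HasSum_scal n x a F c : HasSum n x F c -> HasSum n x (fun z => Cmult a (F z)) (Cmult a c).
Proof.
  intros h eps he. pose proof (Cmod_ge_0 a).
  destruct (h (eps / (Cmod a + 1))) as [l0 [f0 H0]]; [apply Rdiv_lt_0_compat; lra|].
  exists l0. split; auto. intros l hl hi. specialize (H0 l hl hi).
  rewrite lsumC_scal.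
  replace (Cminus (Cmult a (lsumC F l)) (Cmult a c)) with (Cmult a (Cminus (lsumC F l) c))
    by cring.
  rewrite Cmod_mult. apply scaled_small; try lra. apply Cmod_ge_0.
Qed.

Lemma HasSum_ext n x F G c : (forall z, orb n x z -> F z = G z) -> HasSum n x F c -> HasSum n x G c.
Proof.
  intros e h eps he. destruct (h eps he) as [l0 [f0 H0]]. exists l0. split; auto.
  intros l hl hi. rewrite <- (lsumC_ext F G); auto. intros y hy. apply e.
  destruct hl as [_ f]. rewrite Forall_forall in f. auto.
Qed.

Lemma HasSum_bound n x F c B : (forall l, finsub n x l -> Cmod (lsumC F l) <= B) ->
  HasSum n x F c -> Cmod c <= B.
Proof.
  intros hB h. apply Rnot_lt_le. intro hc.
  destruct (h (Cmod c - B) ltac:(lra)) as [l0 [f0 H0]].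
  specialize (H0 l0 f0 (incl_refl _)). specialize (hB l0 f0).
  assert (c = Cplus (lsumC F l0) (Copp (Cminus (lsumC F l0) c))) by cring.
  pose proof (Cmod_triangle (lsumC F l0) (Copp (Cminus (lsumC F l0) c))).
  rewrite <- H, Cmod_opp in H1. lra.
Qed.

Lemma Inner_bound n x u w A B c : NormLe n x u A -> NormLe n x w B -> Inner n x u w c ->
  Cmod c <= A * B.
Proof.
  intros [hA HA] [hB HB] hI. refine (HasSum_bound n x _ _ _ _ hI).
  intros l hl. eapply Rle_trans; [apply Cmod_lsumC|].
  rewrite (lsumR_ext _ (fun y => Cmod (u y) * Cmod (w y))).
  - apply cauchy_schwarz; auto.
  - intros y _. rewrite Cmod_mult, Cmod_conj. reflexivity.
Qed.

Section Transfer.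
Variables (n : nat) (x : R) (F G : R -> C) (da db : R -> bool) (psi psi' : R -> R).
Hypothesis psi_inj : Injective psi.
Hypothesis psi'_inj : Injective psi'.
Hypothesis psi_psi' : forall z, da z = true -> psi (psi' z) = z.
Hypothesis psi_orb : forall y, orb n x y -> db y = true -> orb n x (psi y) /\ da (psi y) = true.
Hypothesis psi'_orb : forall z, orb n x z -> da z = true -> orb n x (psi' z) /\ db (psi' z) = true.
Hypothesis G_on : forall y, orb n x y -> db y = true -> G y = F (psi y).
Hypothesis G_off : forall y, orb n x y -> db y = false -> G y = RtoC 0.
Hypothesis F_off : forall z, orb n x z -> da z = false -> F z = RtoC 0.

Definition transport (l0 l : list R) : list R :=
  map psi (filter db l) ++ filter (fun z => negb (da z)) l0.

Lemma transport_finsub l0 l : finsub n x l0 -> finsub n x l -> finsub n x (transport l0 l).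
Proof.
  intros [nd0 f0] [ndl fl]. rewrite Forall_forall in f0, fl. split.
  - apply NoDup_app.
    + apply Injective_map_NoDup; auto. apply NoDup_filter; auto.
    + apply NoDup_filter; auto.
    + intros z i1 i2. apply in_map_iff in i1 as [y [<- hy]].
      apply filter_In in hy as [hy1 hy2].
      apply filter_In in i2 as [_ e]. apply Bool.negb_true_iff in e.
      destruct (psi_orb y) as [_ e']; auto. congruence.
  - rewrite Forall_forall. intros z hz. apply in_app_or in hz as [hz|hz].
    + apply in_map_iff in hz as [y [<- hy]]. apply filter_In in hy as [hy1 hy2].
      apply psi_orb; auto.
    + apply filter_In in hz as [hz _]. auto.
Qed.

Lemma transport_incl l0 l : finsub n x l0 -> incl (map psi' (filter da l0)) l ->
  incl l0 (transport l0 l).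
Proof.
  intros [_ f0] hi z hz. rewrite Forall_forall in f0. unfold transport. destruct (da z) eqn:e.
  - apply in_or_app. left. rewrite <- (psi_psi' z e). apply in_map. apply filter_In. split.
    + apply hi. apply in_map. apply filter_In; auto.
    + apply psi'_orb; auto.
  - apply in_or_app. right. apply filter_In. rewrite e. auto.
Qed.

Lemma transport_sum l0 l : finsub n x l0 -> finsub n x l ->
  lsumC G l = lsumC F (transport l0 l).
Proof.
  intros [_ f0] [_ fl]. rewrite Forall_forall in f0, fl.
  unfold transport. rewrite lsumC_app, lsumC_map.
  rewrite (lsumC_zero F (filter _ l0)).
  2:{ intros z hz. apply filter_In in hz as [hz e]. apply Bool.negb_true_iff in e.
      apply F_off; auto. }
  rewrite (lsumC_split G l db), (lsumC_zero G (filter (fun z => negb (db z)) l)).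
  2:{ intros z hz. apply filter_In in hz as [hz e]. apply Bool.negb_true_iff in e.
      apply G_off; auto. }
  rewrite (lsumC_ext G (fun y => F (psi y)) (filter db l)); [cring|].
  intros y hy. apply filter_In in hy as [hy e]. apply G_on; auto.
Qed.

Lemma HasSum_transfer c : HasSum n x F c -> HasSum n x G c.
Proof.
  intros h eps he. destruct (h eps he) as [l0 [hl0 H0]].
  exists (map psi' (filter da l0)). split.
  - pose proof hl0 as [nd0 f0]. rewrite Forall_forall in f0. split.
    + apply Injective_map_NoDup; auto. apply NoDup_filter; auto.
    + rewrite Forall_forall. intros y hy. apply in_map_iff in hy as [z [<- hz]].
      apply filter_In in hz as [h1 h2]. apply psi'_orb; auto.
  - intros l hl hi. rewrite (transport_sum l0 l hl0 hl).
    apply H0; [apply transport_finsub|apply transport_incl]; auto.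
Qed.

End Transfer.

Lemma Mop_on n a b v z : in_phi n a z -> Mop n a b v z = v (phimap n a b z).
Proof. intro i. unfold Mop. destruct (in_phi_dec n a z); [reflexivity|contradiction]. Qed.

Lemma Mop_off n a b v z : ~ in_phi n a z -> Mop n a b v z = RtoC 0.
Proof. intro i. unfold Mop. destruct (in_phi_dec n a z); [contradiction|reflexivity]. Qed.

Lemma HasSum_cyl_transfer n x a b (F G : R -> C) c :
  (2 <= n)%nat -> is_word n a -> is_word n b ->
  (forall y, in_phi n b y -> G y = F (phimap n b a y)) ->
  (forall y, ~ in_phi n b y -> G y = RtoC 0) ->
  (forall z, ~ in_phi n a z -> F z = RtoC 0) ->
  HasSum n x F c -> HasSum n x G c.
Proof.
  intros h ha hb hG hG0 hF0.
  assert (off : forall u y, in_phib n u y = false -> ~ in_phi n u y)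
    by (intros u y e i; apply in_phib_true in i; congruence).
  apply (HasSum_transfer n x F G (in_phib n a) (in_phib n b) (phimap n b a) (phimap n a b));
    try (apply phimap_injective; auto);
    try (intros ? _; apply phimap_inv; auto);
    try (intros ? ? e; apply in_phib_true in e; split;
         [apply orb_phimap; auto|apply in_phib_true, phimap_in; auto]);
    intros y _ e; [apply hG, in_phib_true, e|apply hG0, off, e|apply hF0, off, e].
Qed.

Lemma Mop_adjoint n x a b : (2 <= n)%nat -> is_word n a -> is_word n b ->
  IsAdjoint n x (Mop n a b) (Mop n b a).
Proof.
  intros h ha hb. split; [apply Mop_bounded; auto|]. intros v w _ _ c. unfold Inner. split.
  - apply (HasSum_cyl_transfer n x a b); auto.
    + intros y hy. rewrite Mop_on, (Mop_on n a b) by (auto; apply phimap_in; auto).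
      rewrite phimap_inv by auto. reflexivity.
    + intros y hy. rewrite Mop_off by auto. cring.
    + intros z hz. rewrite Mop_off by auto. cring.
  - apply (HasSum_cyl_transfer n x b a); auto.
    + intros z hz. rewrite Mop_on, (Mop_on n b a) by (auto; apply phimap_in; auto).
      rewrite phimap_inv by auto. reflexivity.
    + intros z hz. rewrite Mop_off by auto. cring.
    + intros y hy. rewrite Mop_off by auto. cring.
Qed.

(** ** rho_x(g) is a finite sum of matrix units; the inclusion into pi_x(O_n) *)

Definition SumM n (ps : list (word * word)) : op :=
  spanop (map (fun p => (RtoC 1, Mop n (fst p) (snd p))) ps).

Lemma SumM_cons n p ps v z :
  SumM n (p :: ps) v z = Cplus (Mop n (fst p) (snd p) v z) (SumM n ps v z).
Proof. unfold SumM. simpl. unfold op_add, op_scal. f_equal. cring. Qed.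

Lemma SumM_zero_at n ps v z : (forall p, In p ps -> ~ in_phi n (fst p) z) ->
  SumM n ps v z = RtoC 0.
Proof.
  induction ps as [|p ps IH]; intro H; auto.
  rewrite SumM_cons, IH, Mop_off; [cring| |].
  - apply H; left; auto.
  - intros; apply H; right; auto.
Qed.

Lemma SumM_at n ps v z a b : NoDup ps -> In (a, b) ps -> in_phi n a z ->
  (forall p, In p ps -> in_phi n (fst p) z -> p = (a, b)) -> SumM n ps v z = v (phimap n a b z).
Proof.
  induction ps as [|p ps IH]; intros nd hin ha hU; [contradiction|].
  inversion nd as [|p' ps' hnotin nd']; subst p' ps'.
  rewrite SumM_cons. destruct (in_phi_dec n (fst p) z) as [i|i].
  - assert (ep : p = (a, b)) by (apply hU; auto; left; auto). subst p. simpl.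
    rewrite Mop_on by exact ha. rewrite SumM_zero_at; [cring|].
    intros p' hp' hi'. assert (p' = (a, b)) by (apply hU; auto; right; auto).
    subst. contradiction.
  - assert (hin' : In (a, b) ps) by (destruct hin as [e|hin]; [rewrite e in i; contradiction|auto]).
    rewrite Mop_off by exact i. rewrite IH; auto; [cring|].
    intros; apply hU; auto; right; auto.
Qed.

Lemma NoDup_combine {A B} (la : list A) (lb : list B) : NoDup la -> NoDup (combine la lb).
Proof.
  revert lb. induction la as [|a la IH]; intros lb nd; [constructor|].
  destruct lb as [|b lb]; [constructor|]. simpl.
  inversion nd; subst. constructor; auto. intro hin. apply in_combine_l in hin. contradiction.
Qed.

Lemma combine_unique_l {A B} (la : list A) (lb : list B) a b b' : NoDup la ->
  In (a, b) (combine la lb) -> In (a, b') (combine la lb) -> b = b'.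
Proof.
  revert lb. induction la as [|a0 la IH]; intros [|b0 lb] nd h1 h2; simpl in *; try contradiction.
  inversion nd; subst. destruct h1 as [e1|h1]; destruct h2 as [e2|h2].
  - congruence.
  - inversion e1; subst. apply in_combine_l in h2. contradiction.
  - inversion e2; subst. apply in_combine_l in h1. contradiction.
  - eapply IH; eauto.
Qed.

Lemma combine_unique_r {A B} (la : list A) (lb : list B) a a' b : NoDup lb ->
  In (a, b) (combine la lb) -> In (a', b) (combine la lb) -> a = a'.
Proof.
  revert lb. induction la as [|a0 la IH]; intros [|b0 lb] nd h1 h2; simpl in *; try contradiction.
  inversion nd; subst. destruct h1 as [e1|h1]; destruct h2 as [e2|h2].
  - congruence.
  - inversion e1; subst. apply in_combine_r in h2. contradiction.
  - inversion e2; subst. apply in_combine_r in h1. contradiction.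
  - eapply IH; eauto.
Qed.

Lemma combine_in_nth {A B} (la : list A) (lb : list B) k da db :
  length la = length lb -> (k < length la)%nat ->
  In (nth k la da, nth k lb db) (combine la lb).
Proof.
  intros e hk. rewrite <- combine_nth by auto. apply nth_In. rewrite length_combine. lia.
Qed.

Lemma combine_words n la lb : admissible n la -> admissible n lb ->
  forall p, In p (combine la lb) -> is_word n (fst p) /\ is_word n (snd p).
Proof.
  intros h1 h2 [a b] hp. simpl. split.
  - apply (adm_words n la); auto. eapply in_combine_l; eauto.
  - apply (adm_words n lb); auto. eapply in_combine_r; eauto.
Qed.

Lemma combine_cover_l n la lb z : (2 <= n)%nat -> admissible n la -> length la = length lb ->
  0 <= z < 1 -> exists (a b : word), In (a, b) (combine la lb) /\ in_phi n a z.
Proof.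
  intros h hla e hz. destruct (adm_cover n la z h hla hz) as [a [ha hza]].
  destruct (In_nth la a [] ha) as [k [hk ek]]. exists a, (nth k lb []). split; auto.
  rewrite <- ek at 1. apply combine_in_nth; lia.
Qed.

Lemma combine_cover_r n la lb y : (2 <= n)%nat -> admissible n lb -> length la = length lb ->
  0 <= y < 1 -> exists (a b : word), In (a, b) (combine la lb) /\ in_phi n b y.
Proof.
  intros h hlb e hy. destruct (adm_cover n lb y h hlb hy) as [b [hb hyb]].
  destruct (In_nth lb b [] hb) as [k [hk ek]]. exists (nth k la []), b. split; auto.
  rewrite <- ek at 1. apply combine_in_nth; lia.
Qed.

Lemma SumM_adm_at n la lb v z a b : (2 <= n)%nat -> admissible n la -> length la = length lb ->
  In (a, b) (combine la lb) -> in_phi n a z -> SumM n (combine la lb) v z = v (phimap n a b z).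
Proof.
  intros h hla e hin hz. apply SumM_at; auto.
  - apply NoDup_combine. apply hla.
  - intros [a' b'] hp hz'. simpl in hz'.
    assert (a' = a) by (apply (adm_unique n la z a' a h hla); auto; eapply in_combine_l; eauto).
    subst a'. f_equal. eapply combine_unique_l; eauto. apply hla.
Qed.

Lemma SumM_outside n la lb v z : (2 <= n)%nat -> admissible n la -> ~ (0 <= z < 1) ->
  SumM n (combine la lb) v z = RtoC 0.
Proof.
  intros h hla hz. apply SumM_zero_at. intros [a b] hp ha. simpl in ha. apply hz.
  apply (in_phi_range n a); auto. apply (adm_words n la); auto. eapply in_combine_l; eauto.
Qed.

Lemma RhoSet_SumM n T : (2 <= n)%nat -> RhoSet n T ->
  exists la lb, admissible n la /\ admissible n lb /\ T = SumM n (combine la lb).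
Proof.
  intros h [g [[_ [_ [gsurj [la [lb [e [hla [hlb hg]]]]]]]] [r1 r2]]].
  exists la, lb. split; [auto|split; [auto|]].
  apply functional_extensionality; intro v; apply functional_extensionality; intro z.
  destruct (classic (0 <= z < 1)) as [hz|hz]; [|rewrite r2, SumM_outside; auto].
  destruct (gsurj z hz) as [y [hy <-]]. rewrite r1 by auto.
  destruct (adm_cover n lb y h hlb hy) as [b [hb hyb]].
  destruct (In_nth lb b [] hb) as [k [hk ek]].
  set (a := nth k la []).
  assert (gy : g y = phimap n b a y).
  { unfold phimap. rewrite <- ek. apply (hg k); [lia|]. rewrite ek; auto. }
  rewrite (SumM_adm_at n la lb v (g y) a b h hla e).
  - rewrite gy, phimap_inv; auto.
  - unfold a. rewrite <- ek. apply combine_in_nth; lia.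
  - rewrite gy. apply phimap_in; auto.
Qed.

Lemma Mop_in_alg n x (A : op -> Prop) : (2 <= n)%nat -> CStarSubalg n x A ->
  (forall i, (1 <= i <= n)%nat -> A (Sop n i)) ->
  forall a b, is_word n a -> is_word n b -> A (Mop n a b).
Proof.
  intros h hA hS. destruct hA as [_ [_ [_ [_ [hcomp [hadj _]]]]]].
  assert (S1 : forall i, (1 <= i <= n)%nat -> A (Mop n [i] [])).
  { intros i hi. rewrite <- Sop_Mop by auto. apply hS; auto. }
  assert (S2 : forall i, (1 <= i <= n)%nat -> A (Mop n [] [i])).
  { intros i hi. apply (hadj (Mop n [i] [])); auto.
    apply Mop_adjoint; auto; repeat constructor; lia. }
  assert (Id : A (Mop n [] [])).
  { pose proof (Mop_comp_extend_left n [] [1%nat] [] [] h (Forall_nil _)) as E. simpl in E.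
    rewrite <- E. apply hcomp; [apply S2|apply S1]; lia. }
  assert (L : forall a, is_word n a -> A (Mop n a [])).
  { induction a as [|i a IH]; intro ha; auto. inversion ha; subst.
    pose proof (Mop_comp_extend_left n [i] [] [] a h H2) as E. simpl in E. rewrite <- E.
    apply hcomp; auto. }
  assert (Rr : forall b, is_word n b -> A (Mop n [] b)).
  { induction b as [|i b IH]; intro hw; auto. inversion hw; subst.
    pose proof (Mop_comp_extend_right n [] [] [i] b h H2) as E. simpl in E. rewrite <- E.
    apply hcomp; auto. }
  intros a b ha hb. pose proof (Mop_comp_extend_left n a [] b [] h (Forall_nil _)) as E.
  rewrite !app_nil_r in E. simpl in E. rewrite <- E. apply hcomp; auto.
Qed.

Lemma SumM_span (Q : op -> Prop) n ps : (forall p, In p ps -> Q (Mop n (fst p) (snd p))) ->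
  Span Q (SumM n ps).
Proof.
  intro H. exists (map (fun p => (RtoC 1, Mop n (fst p) (snd p))) ps). split; [|reflexivity].
  rewrite Forall_map, Forall_forall. exact H.
Qed.

Lemma rho_closure_in_PiOn n x T : (2 <= n)%nat -> BoundedOp n x T ->
  Closure n x (Span (RhoSet n)) T -> PiOn n x T.
Proof.
  intros h hT hc A hA hS. pose proof hA as [_ [h0 [hadd [hsc [_ [_ hcl]]]]]].
  assert (hspan : forall X, Span A X -> A X) by (apply Span_ind; auto).
  apply hcl; auto. apply (Closure_mono n x (Span (RhoSet n))); auto.
  apply Span_ind; auto.
  intros R hR. destruct (RhoSet_SumM n R h hR) as [la [lb [h1 [h2 ->]]]].
  apply hspan, SumM_span. intros p hp. destruct (combine_words n la lb h1 h2 p hp).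
  apply (Mop_in_alg n x A h hA hS); auto.
Qed.

(** ** The closed span of the matrix units is a C*-subalgebra *)

Definition MatUnit n (T : op) : Prop :=
  exists a b, is_word n a /\ is_word n b /\ T = Mop n a b.

Lemma SpanMU_bounded n x T : (2 <= n)%nat -> Span (MatUnit n) T -> BoundedOp n x T.
Proof. intro h. apply Bounded_span. intros A [a [b [ha [hb ->]]]]. apply Mop_bounded; auto. Qed.

Lemma MatUnit_comp n X Y : (2 <= n)%nat -> MatUnit n X -> MatUnit n Y ->
  Span (MatUnit n) (op_comp X Y).
Proof.
  intros h [a [b [ha [hb ->]]]] [c [d [hc [hd ->]]]].
  destruct (word_trichotomy n b c h hb hc) as [[w ->]|[[w ->]|hdis]].
  - assert (hw : is_word n w) by (apply Forall_app in hb; tauto).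
    rewrite Mop_comp_extend_right by auto. apply Span_single.
    exists a, (d ++ w). repeat split; auto. apply is_word_app; auto.
  - assert (hw : is_word n w) by (apply Forall_app in hc; tauto).
    rewrite Mop_comp_extend_left by auto. apply Span_single.
    exists (a ++ w), d. repeat split; auto. apply is_word_app; auto.
  - rewrite Mop_comp_disjoint by auto. apply Span_zero.
Qed.

Lemma SpanMU_comp n X Y : (2 <= n)%nat -> Span (MatUnit n) X -> Span (MatUnit n) Y ->
  Span (MatUnit n) (op_comp X Y).
Proof.
  intros h hX hY. revert X hX.
  apply (Span_ind (MatUnit n) (fun X => Span (MatUnit n) (op_comp X Y))).
  - apply Span_zero.
  - intros T U hT hU. apply (Span_add _ _ _ hT hU).
  - intros c T hT. apply (Span_scal _ c _ hT).
  - intros M hM. pose proof hM as [a [b [_ [_ ->]]]]. revert Y hY.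
    apply (Span_ind (MatUnit n) (fun Y => Span (MatUnit n) (op_comp (Mop n a b) Y))).
    + replace (op_comp (Mop n a b) op_zero) with op_zero; [apply Span_zero|].
      apply functional_extensionality; intro v; apply functional_extensionality; intro z.
      unfold op_comp, op_zero, Mop. destruct (in_phi_dec n a z); auto.
    + intros T U hT hU.
      replace (op_comp (Mop n a b) (op_add T U))
        with (op_add (op_comp (Mop n a b) T) (op_comp (Mop n a b) U)); [apply Span_add; auto|].
      apply functional_extensionality; intro v; apply functional_extensionality; intro z.
      unfold op_comp, op_add, Mop. destruct (in_phi_dec n a z); auto. cring.
    + intros c T hT.
      replace (op_comp (Mop n a b) (op_scal c T))
        with (op_scal c (op_comp (Mop n a b) T)); [apply Span_scal; auto|].
      apply functional_extensionality; intro v; apply functional_extensionality; intro z.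
      unfold op_comp, op_scal, Mop. destruct (in_phi_dec n a z); auto. cring.
    + intros N hN. apply MatUnit_comp; auto.
Qed.

Definition MatUnitAlg n x (T : op) : Prop := BoundedOp n x T /\ Closure n x (Span (MatUnit n)) T.

Lemma comp_dist_le n x T U A B M1 MU MA M2 :
  BoundedOp n x U -> BoundedOp n x A -> BoundedOp n x B ->
  OpNormLe n x (fun v z => Cminus (T v z) (A v z)) M1 -> OpNormLe n x U MU ->
  OpNormLe n x A MA -> OpNormLe n x (fun v z => Cminus (U v z) (B v z)) M2 ->
  OpNormLe n x (fun v z => Cminus (op_comp T U v z) (op_comp A B v z)) (M1 * MU + MA * M2).
Proof.
  intros bU bA bB [h1 n1] [hU nU] [hA nA] [h2 n2]. split; [nra|]. intros v c hv hc.
  assert (hUv : InH n x (U v)) by (apply bU; auto).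
  assert (hBv : InH n x (B v)) by (apply bB; auto).
  replace (fun z => Cminus (op_comp T U v z) (op_comp A B v z))
    with (fun z => Cplus (Cminus (T (U v) z) (A (U v) z)) (A (fun y => Cminus (U v y) (B v y)) z)).
  2:{ apply functional_extensionality; intro z. unfold op_comp.
      rewrite <- (Bounded_lin_sub n x A (U v) (B v)) by auto. cring. }
  replace ((M1 * MU + MA * M2) * c) with (M1 * (MU * c) + MA * (M2 * c)) by ring.
  apply NormLe_add; [apply n1; auto|apply nA; [apply InH_sub|]; auto].
Qed.

Lemma Closure_comp n x T U : (2 <= n)%nat -> MatUnitAlg n x T -> MatUnitAlg n x U ->
  Closure n x (Span (MatUnit n)) (op_comp T U).
Proof.
  intros h [bT cT] [bU cU] eps he.
  pose proof bU as [_ [_ [_ [MU nU]]]]. pose proof (proj1 nU) as hMU.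
  destruct (cT (eps / 2 / (MU + 1))) as [A [hA [M1 [hM1 n1]]]]; [apply Rdiv_lt_0_compat; lra|].
  pose proof (SpanMU_bounded n x A h hA) as bA. pose proof bA as [_ [_ [_ [MA nA]]]].
  pose proof (proj1 nA) as hMA.
  destruct (cU (eps / 2 / (MA + 1))) as [B [hB [M2 [hM2 n2]]]]; [apply Rdiv_lt_0_compat; lra|].
  exists (op_comp A B). split; [apply SpanMU_comp; auto|].
  exists (M1 * MU + MA * M2). split.
  - pose proof (scaled_small MU M1 (eps / 2) hMU (proj1 n1) ltac:(lra) ltac:(lra)).
    pose proof (scaled_small MA M2 (eps / 2) hMA (proj1 n2) ltac:(lra) ltac:(lra)). lra.
  - apply comp_dist_le; auto. apply (SpanMU_bounded n x B h hB).
Qed.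

Definition trunc (l : list R) (d : vec) : vec := fun z => if in_listb l z then d z else RtoC 0.

Lemma trunc_out l d z : ~ In z l -> trunc l d z = RtoC 0.
Proof. intro hz. unfold trunc. destruct (in_listb l z) eqn:e; auto. apply in_listb_true in e. contradiction. Qed.

Lemma trunc_in l d z : In z l -> trunc l d z = d z.
Proof. intro hz. unfold trunc. apply in_listb_true in hz. rewrite hz. reflexivity. Qed.

Lemma trunc_InH n x l d : finsub n x l ->
  InH n x (trunc l d) /\ NormLe n x (trunc l d) (sqrt (lsumR (fun y => Cmod (d y) ^ 2) l)).
Proof.
  intros hl. set (s := lsumR (fun y => Cmod (d y) ^ 2) l).
  assert (hs0 : 0 <= s) by (apply lsumR_nonneg; intros; apply pow2_ge_0).
  assert (hn : NormLe n x (trunc l d) (sqrt s)).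
  { split; [apply sqrt_pos|]. intros l' hl'. rewrite pow2_sqrt by auto.
    rewrite (lsumR_ext _ (fun z => if in_listb l z then Cmod (d z) ^ 2 else 0)).
    2:{ intros z _. unfold trunc. destruct (in_listb l z); auto. rewrite Cmod0. ring. }
    rewrite lsumR_if. apply lsumR_incl.
    - apply NoDup_filter. apply hl'.
    - apply hl.
    - intros z hz. apply filter_In in hz as [_ e]. apply in_listb_true; auto.
    - intros; apply pow2_ge_0. }
  split; [|exact hn]. split; [|exists (sqrt s); auto].
  intros z hz. apply trunc_out. intro hin.
  destruct hl as [_ f]. rewrite Forall_forall in f. apply hz, f; auto.
Qed.

Definition AdjOnFinite n x (X X' : op) : Prop :=
  forall u l w, finsub n x l -> (forall z, ~ In z l -> u z = RtoC 0) -> InH n x u -> InH n x w ->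
    Inner n x (X u) w (lsumC (fun y => Cmult (Cconj (u y)) (X' w y)) l).

Lemma AdjOnFinite_span n x X : (2 <= n)%nat -> Span (MatUnit n) X ->
  exists X', Span (MatUnit n) X' /\ AdjOnFinite n x X X'.
Proof.
  intros h. apply (Span_ind (MatUnit n) (fun X => exists X', Span (MatUnit n) X' /\ AdjOnFinite n x X X')).
  - exists op_zero. split; [apply Span_zero|]. intros u l w _ _ _ _. unfold Inner.
    rewrite lsumC_zero; [apply HasSum_zero|]; intros; unfold op_zero; cring.
  - intros T U [T' [s1 p1]] [U' [s2 p2]]. exists (op_add T' U'). split; [apply Span_add; auto|].
    intros u l w hl hu hu' hw. specialize (p1 u l w hl hu hu' hw). specialize (p2 u l w hl hu hu' hw).
    unfold Inner in *. pose proof (HasSum_add n x _ _ _ _ p1 p2) as hs.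
    rewrite <- lsumC_plus in hs.
    rewrite (lsumC_ext _ (fun y => Cplus (Cmult (Cconj (u y)) (T' w y)) (Cmult (Cconj (u y)) (U' w y))))
      by (intros; unfold op_add; cring).
    eapply HasSum_ext; [|exact hs]. intros z _. unfold op_add. cring.
  - intros c T [T' [s1 p1]]. exists (op_scal (Cconj c) T'). split; [apply Span_scal; auto|].
    intros u l w hl hu hu' hw. specialize (p1 u l w hl hu hu' hw). unfold Inner in *.
    pose proof (HasSum_scal n x (Cconj c) _ _ p1) as hs. rewrite <- lsumC_scal in hs.
    rewrite (lsumC_ext _ (fun y => Cmult (Cconj c) (Cmult (Cconj (u y)) (T' w y))))
      by (intros; unfold op_scal; cring).
    eapply HasSum_ext; [|exact hs]. intros z _. unfold op_scal. cring.
  - intros M [a [b [ha [hb ->]]]]. exists (Mop n b a). split.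
    { apply Span_single. exists b, a. auto. }
    intros u l w hl hz hu hw. apply (Mop_adjoint n x a b h ha hb); auto.
    unfold Inner. apply HasSum_fin; auto. intros z _ hn. rewrite hz by auto. cring.
Qed.

Lemma Cconj_mult_self (z : C) : Cmult (Cconj z) z = RtoC (Cmod z ^ 2).
Proof. rewrite Cmod2_alt. unfold Re, Im. cring. Qed.

Lemma sqrt_le_bound s K : 0 <= s -> 0 <= K -> s <= K * sqrt s -> s <= K ^ 2.
Proof.
  intros hs hK hb. destruct (Req_dec s 0) as [e0|e0]; [rewrite e0; nra|].
  assert (0 < sqrt s) by (apply sqrt_lt_R0; lra).
  assert (sqrt s * sqrt s <= K * sqrt s) by (rewrite sqrt_sqrt by auto; nra).
  assert (sqrt s <= K) by nra.
  replace s with (sqrt s ^ 2) by (apply pow2_sqrt; auto).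
  apply pow_incr. split; [apply sqrt_pos|auto].
Qed.

(** Taking adjoints preserves norm distances: ||T' - X'|| <= ||T - X||.  The
    restriction of d = (T' - X') w to a finite set l is tested against T - X. *)
Lemma adjoint_dist_le n x T T' X X' M : IsAdjoint n x T T' -> AdjOnFinite n x X X' ->
  BoundedOp n x X' ->
  OpNormLe n x (fun v z => Cminus (T v z) (X v z)) M ->
  OpNormLe n x (fun v z => Cminus (T' v z) (X' v z)) M.
Proof.
  intros [bT' hadj] hX bX' [hM HM]. split; auto. intros w c hw hc.
  pose proof (NormLe_nonneg n x w c hc) as hc0.
  split; [nra|]. intros l hl.
  set (d := fun y => Cminus (T' w y) (X' w y)).
  set (s := lsumR (fun y => Cmod (d y) ^ 2) l).
  change (s <= (M * c) ^ 2).
  assert (hs0 : 0 <= s) by (apply lsumR_nonneg; intros; apply pow2_ge_0).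
  destruct (trunc_InH n x l d hl) as [hu hnu]. fold s in hnu. set (u := trunc l d) in *.
  assert (hsupp : forall z, ~ In z l -> u z = RtoC 0) by (intros; apply trunc_out; auto).
  assert (i1 : Inner n x (T u) w (lsumC (fun y => Cmult (Cconj (u y)) (T' w y)) l)).
  { apply hadj; auto. unfold Inner. apply HasSum_fin; auto.
    intros z _ hn. rewrite (hsupp z hn). cring. }
  assert (i2 := hX u l w hl hsupp hu hw).
  assert (es : Cplus (lsumC (fun y => Cmult (Cconj (u y)) (T' w y)) l)
      (Cmult (RtoC (-1)) (lsumC (fun y => Cmult (Cconj (u y)) (X' w y)) l)) = RtoC s).
  { unfold s. rewrite <- lsumC_RtoC, <- lsumC_scal, <- lsumC_plus. apply lsumC_ext.
    intros y hy. unfold u. rewrite trunc_in by auto. rewrite <- Cconj_mult_self. unfold d. cring. }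
  assert (i3 : Inner n x (fun z => Cminus (T u z) (X u z)) w (RtoC s)).
  { unfold Inner in *. rewrite <- es.
    eapply HasSum_ext; [|exact (HasSum_add n x _ _ _ _ i1 (HasSum_scal n x (RtoC (-1)) _ _ i2))].
    intros z _. cring. }
  pose proof (Inner_bound n x _ _ _ _ _ (HM u _ hu hnu) hc i3) as hb.
  rewrite Cmod_R, Rabs_pos_eq in hb by auto.
  apply sqrt_le_bound; auto; [nra|lra].
Qed.

Lemma MatUnitAlg_adjoint n x T T' : (2 <= n)%nat -> MatUnitAlg n x T -> IsAdjoint n x T T' ->
  MatUnitAlg n x T'.
Proof.
  intros h [bT cT] hadj. split; [apply hadj|]. intros eps he.
  destruct (cT eps he) as [X [hX [M [hM nM]]]].
  destruct (AdjOnFinite_span n x X h hX) as [X' [hX' pX]].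
  exists X'. split; auto. exists M. split; auto.
  apply (adjoint_dist_le n x T T' X X'); auto. apply (SpanMU_bounded n x); auto.
Qed.

Lemma MatUnitAlg_CStar n x : (2 <= n)%nat -> CStarSubalg n x (MatUnitAlg n x).
Proof.
  intro h. split; [|split; [|split; [|split; [|split; [|split]]]]].
  - intros T [hT _]; auto.
  - split; [apply Bounded_zero|]. apply Closure_self. apply Span_zero.
  - intros T U [bT cT] [bU cU]. split; [apply Bounded_add; auto|].
    apply Closure_add; auto. intros; apply Span_add; auto.
  - intros c T [bT cT]. split; [apply Bounded_scal; auto|].
    apply Closure_scal; auto. intros; apply Span_scal; auto.
  - intros T U hT hU. split; [apply Bounded_comp; [apply hT|apply hU]|]. apply Closure_comp; auto.
  - intros T T' hT hadj. apply (MatUnitAlg_adjoint n x T T'); auto.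
  - intros T hT hc. split; auto. apply (Closure_trans n x _ (MatUnitAlg n x)); auto.
    intros B [_ hB]; auto.
Qed.

(** ** Admissible languages, and sums of matrix units that are rho_x(g) *)

Lemma is_prefix_app (d u : word) s :
  is_prefix (d ++ u) s <-> is_prefix d s /\ is_prefix u (fun k => s (length d + k)%nat).
Proof.
  split.
  - intro H. split.
    + intros k hk. rewrite H by (rewrite length_app; lia). apply app_nth1; auto.
    + intros k hk. rewrite H by (rewrite length_app; lia). rewrite app_nth2 by lia.
      f_equal. lia.
  - intros [H1 H2] k hk. rewrite length_app in hk. destruct (Nat.lt_ge_cases k (length d)).
    + rewrite app_nth1 by auto. apply H1; auto.
    + rewrite app_nth2 by auto. replace k with (length d + (k - length d))%nat at 1 by lia.
      apply H2. lia.
Qed.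

Lemma word_ext_seq n (u : word) : (1 <= n)%nat -> is_word n u ->
  exists s, (forall k, (1 <= s k <= n)%nat) /\ is_prefix u s.
Proof.
  intros hn hw. exists (fun k => nth k u 1%nat). split.
  - intro k. destruct (Nat.lt_ge_cases k (length u)).
    + unfold is_word in hw. rewrite Forall_forall in hw. apply hw. apply nth_In; auto.
    + rewrite nth_overflow by auto. lia.
  - intros k hk. apply nth_indep; auto.
Qed.

Lemma adm_incomparable n L u w : (1 <= n)%nat -> admissible n L -> In u L -> In (u ++ w) L -> w = [].
Proof.
  intros hn [nd [hw hu]] i1 i2. rewrite Forall_forall in hw.
  destruct (word_ext_seq n (u ++ w) hn (hw _ i2)) as [s [hs hp]].
  destruct (hu s hs) as [v [_ [_ huniq]]].
  assert (e : u = u ++ w).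
  { assert (e1 : u = v) by (apply huniq; auto; apply is_prefix_app in hp; tauto).
    assert (e2 : u ++ w = v) by (apply huniq; auto). congruence. }
  destruct w; auto. apply (f_equal (@length nat)) in e. rewrite length_app in e. simpl in e. lia.
Qed.

Lemma adm_perm n L L' : Permutation L L' -> admissible n L -> admissible n L'.
Proof.
  intros hp [nd [hw hu]]. split; [|split].
  - eapply Permutation_NoDup; eauto.
  - eapply Permutation_Forall; eauto.
  - intros s hs. destruct (hu s hs) as [u [hin [hpr huniq]]]. exists u. split; [|split]; auto.
    + eapply Permutation_in; eauto.
    + intros u' hu' hp'. apply huniq; auto. eapply Permutation_in; [apply Permutation_sym|]; eauto.
Qed.

Lemma adm_nil n : admissible n [[]].
Proof.
  split; [|split].
  - repeat constructor; auto.
  - repeat constructor.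
  - intros s _. exists []. split; [left; auto|]. split.
    + intros k hk; simpl in hk; lia.
    + intros u' [<-|[]] _; auto.
Qed.

Lemma adm_letters n : (1 <= n)%nat -> admissible n (map (fun d => [d]) (seq 1 n)).
Proof.
  intro hn. split; [|split].
  - apply Injective_map_NoDup; [intros p q e; congruence|apply seq_NoDup].
  - rewrite Forall_forall. intros u hu. apply in_map_iff in hu as [d [<- hd]]. apply in_seq in hd.
    constructor; [lia|constructor].
  - intros s hs. exists [s 0%nat]. split; [|split].
    + apply in_map_iff. exists (s 0%nat). split; auto. apply in_seq. specialize (hs 0%nat). lia.
    + intros k hk. simpl in hk. assert (k = 0%nat) by lia. subst. reflexivity.
    + intros u' hu' hp. apply in_map_iff in hu' as [d [<- hd]].
      pose proof (hp 0%nat ltac:(simpl; lia)) as e. simpl in e. rewrite e. reflexivity.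
Qed.

Lemma adm_subst n L1 d L2 L' : (1 <= n)%nat -> admissible n (L1 ++ d :: L2) -> admissible n L' ->
  admissible n (L1 ++ L2 ++ map (app d) L').
Proof.
  intros hn hL hL'. pose proof hL as [nd [hw hu]]. destruct hL' as [nd' [hw' hu']].
  rewrite Forall_forall in hw, hw'.
  assert (hd : In d (L1 ++ d :: L2)) by (apply in_or_app; right; left; auto).
  assert (hnd12 : NoDup (L1 ++ L2)) by (eapply NoDup_remove_1; eauto).
  assert (hdn : ~ In d (L1 ++ L2)) by (eapply NoDup_remove_2; eauto).
  assert (h12 : forall e, In e (L1 ++ L2) -> In e (L1 ++ d :: L2)).
  { intros e he. apply in_app_or in he. apply in_or_app. simpl. tauto. }
  assert (hsplit : forall e, In e (L1 ++ L2 ++ map (app d) L') ->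
            In e (L1 ++ L2) \/ exists u, In u L' /\ e = d ++ u).
  { intros e he. rewrite app_assoc in he. apply in_app_or in he as [he|he]; [left; auto|].
    apply in_map_iff in he as [u [<- hu2]]. right. exists u. auto. }
  split; [|split].
  - rewrite app_assoc. apply NoDup_app; [exact hnd12| |].
    + apply Injective_map_NoDup; auto. intros p q e. eapply app_inv_head; eauto.
    + intros e i1 i2. apply in_map_iff in i2 as [u [<- hu2]].
      assert (u = []) by (apply (adm_incomparable n (L1 ++ d :: L2) d u hn hL hd); auto).
      subst u. rewrite app_nil_r in i1. contradiction.
  - rewrite Forall_forall. intros e he. destruct (hsplit e he) as [he'|[u [hu2 ->]]].
    + apply hw. apply h12. auto.
    + apply is_word_app; auto.
  - intros s hs. destruct (hu s hs) as [e [he [hpe huniq]]].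
    destruct (list_eq_dec Nat.eq_dec e d) as [->|ne].
    + destruct (hu' (fun k => s (length d + k)%nat) (fun k => hs _)) as [u [hu2 [hpu huniq']]].
      exists (d ++ u). split; [|split].
      * rewrite app_assoc. apply in_or_app. right. apply in_map; auto.
      * apply is_prefix_app. auto.
      * intros u' hv' hp'. destruct (hsplit u' hv') as [hv|[u3 [hu3 ->]]].
        { exfalso. assert (u' = d) by (apply huniq; auto). subst u'. contradiction. }
        apply is_prefix_app in hp' as [_ hp']. f_equal. apply huniq'; auto.
    + exists e. assert (he' : In e (L1 ++ L2)).
      { apply in_app_or in he. apply in_or_app. simpl in he.
        destruct he as [he|[he|he]]; auto. congruence. }
      split; [|split]; auto.
      * rewrite app_assoc. apply in_or_app. auto.
      * intros u' hv' hp'. destruct (hsplit u' hv') as [hv|[u3 [hu3 ->]]]; [apply huniq; auto|].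
        apply is_prefix_app in hp' as [hp' _]. exfalso. apply ne. symmetry. apply huniq; auto.
Qed.

Lemma admissible_completion n c : (2 <= n)%nat -> is_word n c ->
  exists R, admissible n (c :: R) /\ length R = (length c * (n - 1))%nat.
Proof.
  intros h. induction c as [|i c IH]; intro hw.
  - exists []. split; [apply adm_nil|reflexivity].
  - inversion hw as [|? ? hi hc]; subst. destruct (IH hc) as [R [hR eR]].
    assert (hin : In [i] (map (fun d => [d]) (seq 1 n)))
      by (apply in_map_iff; exists i; split; auto; apply in_seq; lia).
    destruct (in_split _ _ hin) as [L1 [L2 e]].
    pose proof (adm_letters n ltac:(lia)) as h1. rewrite e in h1.
    pose proof (adm_subst n L1 [i] L2 (c :: R) ltac:(lia) h1 hR) as h2.
    exists (L1 ++ L2 ++ map (app [i]) R). split.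
    + refine (adm_perm n _ _ _ h2). simpl map.
      rewrite (app_assoc L1 L2), (app_assoc L1 L2).
      apply Permutation_sym. apply Permutation_middle.
    + rewrite !length_app, length_map.
      assert (el : length (L1 ++ [i] :: L2) = n)
        by (rewrite <- e, length_map, length_seq; auto).
      rewrite length_app in el. simpl in el. simpl length.
      unfold word in eR. rewrite eR. simpl Nat.mul. lia.
Qed.

Lemma two_word_language n c : (2 <= n)%nat -> is_word n c -> c <> [] ->
  exists r, is_word n r /\ forall e, is_word n e -> exists Rc, admissible n (c :: (r ++ e) :: Rc) /\
    length Rc = ((length c + length e) * (n - 1) - 1)%nat.
Proof.
  intros h hc ne. destruct (admissible_completion n c h hc) as [R [hR eR]].
  destruct R as [|r R'].
  { simpl in eR. destruct c; [congruence|]. simpl in eR. nia. }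
  exists r. split; [apply (adm_words n (c :: r :: R')); auto; right; left; auto|].
  intros e he.
  destruct (admissible_completion n e h he) as [Re [hRe eRe]].
  pose proof (adm_subst n [c] r R' (e :: Re) ltac:(lia) hR hRe) as hs.
  exists (R' ++ map (app r) Re). split.
  - refine (adm_perm n _ _ _ hs). simpl. apply perm_skip.
    apply Permutation_sym. apply Permutation_middle.
  - rewrite length_app, length_map. simpl in eR. unfold word in *. rewrite eRe.
    assert (length c >= 1)%nat by (destruct c; [congruence|simpl; lia]). nia.
Qed.

Fixpoint pair_map n (ps : list (word * word)) (y : R) : R :=
  match ps with
  | [] => y
  | p :: t => if in_phi_dec n (snd p) y then phimap n (snd p) (fst p) y else pair_map n t y
  end.

Lemma pair_map_at n ps y a b : In (a, b) ps -> in_phi n b y ->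
  (forall p, In p ps -> in_phi n (snd p) y -> p = (a, b)) -> pair_map n ps y = phimap n b a y.
Proof.
  induction ps as [|p ps IH]; intros hin hb hU; [contradiction|]. simpl.
  destruct (in_phi_dec n (snd p) y) as [i|i].
  - assert (p = (a, b)) by (apply hU; auto; left; auto). subst. reflexivity.
  - destruct hin as [e|hin]; [rewrite e in i; contradiction|].
    apply IH; auto. intros; apply hU; auto; right; auto.
Qed.

Lemma pair_map_comb n la lb y a b : (2 <= n)%nat -> admissible n lb ->
  In (a, b) (combine la lb) -> in_phi n b y -> pair_map n (combine la lb) y = phimap n b a y.
Proof.
  intros h hlb hin hb. apply pair_map_at; auto. intros [a' b'] hp hb'. simpl in hb'.
  assert (b' = b) by (apply (adm_unique n lb y b' b h hlb); auto; eapply in_combine_r; eauto).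
  subst b'. f_equal. symmetry. eapply combine_unique_r; eauto. apply hlb.
Qed.

Lemma pair_map_InVn n la lb : (2 <= n)%nat -> admissible n la -> admissible n lb ->
  length la = length lb -> InVn n (pair_map n (combine la lb)).
Proof.
  intros h hla hlb e. set (g := pair_map n (combine la lb)).
  assert (gb : forall y, 0 <= y < 1 -> exists a b, In (a, b) (combine la lb) /\ in_phi n b y /\
                 g y = phimap n b a y).
  { intros y hy. destruct (combine_cover_r n la lb y h hlb e hy) as [a [b [hin hb]]].
    exists a, b. split; [auto|split; auto]. apply pair_map_comb; auto. }
  split; [|split; [|split]].
  - intros y hy. destruct (gb y hy) as [a [b [hin [hb ->]]]].
    apply (in_phi_range n a); [auto|apply (combine_words n la lb hla hlb _ hin)|].
    apply phimap_in; auto.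
  - intros y y' hy hy' eg.
    destruct (gb y hy) as [a [b [hin [hb gy]]]]. destruct (gb y' hy') as [a' [b' [hin' [hb' gy']]]].
    rewrite gy, gy' in eg.
    assert (a' = a).
    { apply (adm_unique n la (phimap n b a y) a' a h hla).
      - eapply in_combine_l; eauto.
      - eapply in_combine_l; eauto.
      - rewrite eg. apply phimap_in; auto.
      - apply phimap_in; auto. }
    subst a'. assert (b' = b) by (eapply combine_unique_l; eauto; apply hla). subst b'.
    apply (phimap_injective n b a h); auto.
  - intros z hz. destruct (combine_cover_l n la lb z h hla e hz) as [a [b [hin ha]]].
    exists (phimap n a b z). split.
    + apply (in_phi_range n b); [auto|apply (combine_words n la lb hla hlb _ hin)|].
      apply phimap_in; auto.
    + unfold g. rewrite (pair_map_comb n la lb _ a b); auto; [apply phimap_inv; auto|].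
      apply phimap_in; auto.
  - exists la, lb. split; [auto|split; [auto|split; [auto|]]].
    intros k hk a b y hy. unfold g. rewrite (pair_map_comb n la lb y a b); auto.
    unfold a, b. apply combine_in_nth; lia.
Qed.

Lemma SumM_in_RhoSet n la lb : (2 <= n)%nat -> admissible n la -> admissible n lb ->
  length la = length lb -> RhoSet n (SumM n (combine la lb)).
Proof.
  intros h hla hlb e. exists (pair_map n (combine la lb)).
  split; [apply pair_map_InVn; auto|]. split.
  - intros v y hy. destruct (combine_cover_r n la lb y h hlb e hy) as [a [b [hin hb]]].
    rewrite (pair_map_comb n la lb y a b) by auto.
    rewrite (SumM_adm_at n la lb v _ a b h hla e hin); [rewrite phimap_inv; auto|].
    apply phimap_in; auto.
  - intros v z hz. apply SumM_outside; auto.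
Qed.

(** ** The averaging argument: matrix units lie in the closed span of rho_x(V_n) *)

Fixpoint csum (m : nat) (t : nat -> C) : C :=
  match m with O => RtoC 0 | S k => Cplus (csum k t) (t k) end.
Fixpoint rsum (m : nat) (f : nat -> R) : R :=
  match m with O => 0 | S k => rsum k f + f k end.

Lemma rsum_le m f g : (forall j, (j < m)%nat -> f j <= g j) -> rsum m f <= rsum m g.
Proof.
  induction m; simpl; intros H; [lra|]. assert (f m <= g m) by (apply H; lia).
  assert (rsum m f <= rsum m g) by (apply IHm; intros; apply H; lia). lra.
Qed.

Lemma rsum_ext m f g : (forall j, (j < m)%nat -> f j = g j) -> rsum m f = rsum m g.
Proof.
  induction m; simpl; intros H; auto.
  rewrite IHm by (intros; apply H; lia). rewrite H by lia. auto.
Qed.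

Lemma rsum_const m c : rsum m (fun _ => c) = INR m * c.
Proof. induction m; simpl rsum; [simpl; ring|]. rewrite IHm, S_INR. ring. Qed.

Lemma lsumR_rsum F m l :
  lsumR (fun z => rsum m (fun j => F j z)) l = rsum m (fun j => lsumR (F j) l).
Proof.
  induction m; simpl.
  - apply lsumR_zero. auto.
  - rewrite lsumR_plus, IHm. reflexivity.
Qed.

Lemma Cmod_csum m t : Cmod (csum m t) <= rsum m (fun j => Cmod (t j)).
Proof.
  induction m; simpl.
  - rewrite Cmod0. lra.
  - eapply Rle_trans; [apply Cmod_triangle|]. lra.
Qed.

Lemma rsum_sq_aux m f c : 2 * c * rsum m f <= rsum m (fun j => f j ^ 2) + INR m * c ^ 2.
Proof.
  induction m; cbn [rsum]; [simpl; lra|]. rewrite S_INR.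
  assert (2 * c * f m <= f m ^ 2 + c ^ 2).
  { replace (f m ^ 2 + c ^ 2) with ((f m - c) ^ 2 + 2 * c * f m) by ring.
    pose proof (pow2_ge_0 (f m - c)). lra. }
  replace (2 * c * (rsum m f + f m)) with (2 * c * rsum m f + 2 * c * f m) by ring.
  replace ((INR m + 1) * c ^ 2) with (INR m * c ^ 2 + c ^ 2) by ring. lra.
Qed.

Lemma rsum_sq m f : (rsum m f) ^ 2 <= INR m * rsum m (fun j => f j ^ 2).
Proof.
  induction m; cbn [rsum]; [simpl; lra|]. rewrite S_INR.
  pose proof (rsum_sq_aux m f (f m)).
  replace ((rsum m f + f m) ^ 2) with (rsum m f ^ 2 + 2 * f m * rsum m f + f m ^ 2) by ring.
  replace ((INR m + 1) * (rsum m (fun j => f j ^ 2) + f m ^ 2)) with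
    (INR m * rsum m (fun j => f j ^ 2) + rsum m (fun j => f j ^ 2) + INR m * f m ^ 2 + f m ^ 2)
    by ring.
  lra.
Qed.

Lemma csum_zero m t : (forall j, (j < m)%nat -> t j = RtoC 0) -> csum m t = RtoC 0.
Proof.
  induction m; simpl; intros H; auto.
  rewrite IHm by (intros; apply H; lia). rewrite H by lia. cring.
Qed.

Lemma csum_single m t :
  (forall j j', (j < m)%nat -> (j' < m)%nat -> j <> j' -> t j = RtoC 0 \/ t j' = RtoC 0) ->
  Cmod (csum m t) ^ 2 = rsum m (fun j => Cmod (t j) ^ 2).
Proof.
  induction m; intro H; cbn [csum rsum]; [rewrite Cmod0; ring|].
  destruct (classic (t m = RtoC 0)) as [e|e].
  - rewrite e, <- IHm by (intros; apply H; lia). rewrite Cmod0.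
    replace (Cplus (csum m t) (RtoC 0)) with (csum m t) by cring. ring.
  - assert (hz : forall j, (j < m)%nat -> t j = RtoC 0).
    { intros j hj. destruct (H j m) as [h1|h1]; auto; try lia. contradiction. }
    rewrite csum_zero by auto.
    rewrite (rsum_ext m _ (fun _ => 0)) by (intros j hj; rewrite hz, Cmod0 by auto; ring).
    rewrite rsum_const. replace (Cplus (RtoC 0) (t m)) with (t m) by cring. ring.
Qed.

Lemma csum_disjoint_ranges_norm n x m (p q : nat -> word) v A : (2 <= n)%nat ->
  (forall j, (j < m)%nat -> is_word n (p j) /\ is_word n (q j)) ->
  (forall j j', (j < m)%nat -> (j' < m)%nat -> j <> j' -> disjw n (p j) (p j')) ->
  NormLe n x v A ->
  NormLe n x (fun z => csum m (fun j => Mop n (p j) (q j) v z)) (sqrt (INR m) * A).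
Proof.
  intros h hw hd hv. pose proof (NormLe_nonneg _ _ _ _ hv) as hA.
  split; [apply Rmult_le_pos; auto; apply sqrt_pos|]. intros l hl.
  rewrite (lsumR_ext _ (fun z => rsum m (fun j => Cmod (Mop n (p j) (q j) v z) ^ 2))).
  2:{ intros z _. apply csum_single. intros j j' hj hj' ne. unfold Mop.
      destruct (in_phi_dec n (p j) z) as [i1|i1]; [|left; auto].
      destruct (in_phi_dec n (p j') z) as [i2|i2]; [|right; auto].
      exfalso. apply (hd j j' hj hj' ne z); auto. }
  rewrite lsumR_rsum. apply Rle_trans with (rsum m (fun _ => A ^ 2)).
  - apply rsum_le. intros j hj. destruct (hw j hj). apply (Mop_norm n x (p j) (q j) v A h); auto.
  - rewrite rsum_const, Rpow_mult_distr, pow2_sqrt by apply pos_INR. lra.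
Qed.

Fixpoint cat_lists (m : nat) (f : nat -> list R) : list R :=
  match m with O => [] | S k => cat_lists k f ++ f k end.

Lemma cat_lists_in m f z : In z (cat_lists m f) <-> exists j, (j < m)%nat /\ In z (f j).
Proof.
  induction m; simpl.
  - split; [tauto|]. intros [j [hj _]]; lia.
  - rewrite in_app_iff, IHm. split.
    + intros [[j [hj hz]]|hz]; [exists j; split; auto; lia|exists m; auto].
    + intros [j [hj hz]]. destruct (Nat.eq_dec j m); [subst; auto|left; exists j; split; auto; lia].
Qed.

Lemma cat_lists_nodup m f : (forall j, (j < m)%nat -> NoDup (f j)) ->
  (forall j j' z, (j < m)%nat -> (j' < m)%nat -> j <> j' -> In z (f j) -> In z (f j') -> False) ->
  NoDup (cat_lists m f).
Proof.
  induction m; simpl; intros h1 h2; [constructor|]. apply NoDup_app.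
  - apply IHm; intros; [apply h1; lia|]. eapply (h2 j j'); eauto; lia.
  - apply h1; lia.
  - intros z i1 i2. apply cat_lists_in in i1 as [j [hj hz]]. apply (h2 j m z); auto; lia.
Qed.

Lemma lsumR_cat F m f : lsumR F (cat_lists m f) = rsum m (fun j => lsumR F (f j)).
Proof. induction m; simpl; auto. rewrite lsumR_app, IHm. reflexivity. Qed.

Lemma csum_disjoint_sources_norm n x m (p : word) (q : nat -> word) v A : (2 <= n)%nat ->
  is_word n p -> (forall j, (j < m)%nat -> is_word n (q j)) ->
  (forall j j', (j < m)%nat -> (j' < m)%nat -> j <> j' -> disjw n (q j) (q j')) ->
  NormLe n x v A -> NormLe n x (fun z => csum m (fun j => Mop n p (q j) v z)) (sqrt (INR m) * A).
Proof.
  intros h hp hw hd hv. pose proof hv as [hA HA].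
  split; [apply Rmult_le_pos; auto; apply sqrt_pos|]. intros l [ndl fl].
  apply Rle_trans with (lsumR (fun z => INR m * rsum m (fun j => Cmod (Mop n p (q j) v z) ^ 2)) l).
  { apply lsumR_le. intros z _. eapply Rle_trans; [|apply rsum_sq].
    apply pow_incr. split; [apply Cmod_ge_0|apply Cmod_csum]. }
  rewrite lsumR_scal, lsumR_rsum, Rpow_mult_distr, pow2_sqrt by apply pos_INR.
  apply Rmult_le_compat_l; [apply pos_INR|].
  (* the j-th term is a sum of |v|^2 over the image of l inside phi(q j) *)
  set (img := fun j => map (phimap n p (q j)) (filter (in_phib n p) l)).
  rewrite (rsum_ext m _ (fun j => lsumR (fun y => Cmod (v y) ^ 2) (img j))).
  2:{ intros j hj. unfold img. rewrite lsumR_map, <- lsumR_if. apply lsumR_ext. intros z _.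
      unfold Mop, in_phib. destruct (in_phi_dec n p z); auto. rewrite Cmod0. ring. }
  rewrite <- lsumR_cat. apply HA. split.
  - apply cat_lists_nodup.
    + intros j hj. apply Injective_map_NoDup; [apply phimap_injective; auto|].
      apply NoDup_filter; auto.
    + intros j j' z hj hj' ne i1 i2. unfold img in *.
      apply in_map_iff in i1 as [z1 [e1 h1]]. apply in_map_iff in i2 as [z2 [e2 h2]].
      apply filter_In in h1 as [_ h1]. apply filter_In in h2 as [_ h2].
      apply in_phib_true in h1. apply in_phib_true in h2.
      apply (hd j j' hj hj' ne z); [rewrite <- e1|rewrite <- e2]; apply phimap_in; auto.
  - rewrite Forall_forall in *. intros y hy. apply cat_lists_in in hy as [j [hj hy]].
    unfold img in hy. apply in_map_iff in hy as [z [<- hz]]. apply filter_In in hz as [hz1 hz2].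
    apply in_phib_true in hz2. apply orb_phimap; auto.
Qed.

(** The words 1^p 2, p in N, have pairwise disjoint cylinders. *)
Definition marker_word (p : nat) : word := repeat 1%nat p ++ [2%nat].

Lemma marker_word_word n p : (2 <= n)%nat -> is_word n (marker_word p).
Proof.
  intro h. unfold marker_word, is_word. apply Forall_app. split.
  - induction p; simpl; constructor; auto; lia.
  - constructor; [lia|constructor].
Qed.

Lemma marker_word_length p : length (marker_word p) = S p.
Proof. unfold marker_word. rewrite length_app, repeat_length. simpl. lia. Qed.

Lemma marker_word_noprefix p q w : marker_word p = marker_word q ++ w -> p = q.
Proof.
  revert q. induction p as [|p IH]; intros [|q] e; unfold marker_word in *; simpl in e; auto;
    try discriminate.
  injection e. intro e'. f_equal. apply IH. exact e'.
Qed.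

Lemma marker_word_disj n p q : (2 <= n)%nat -> p <> q -> disjw n (marker_word p) (marker_word q).
Proof.
  intros h ne.
  destruct (word_trichotomy n (marker_word p) (marker_word q) h
              (marker_word_word n p h) (marker_word_word n q h)) as [[w e]|[[w e]|hd]]; auto.
  - apply marker_word_noprefix in e. contradiction.
  - apply marker_word_noprefix in e. congruence.
Qed.

Lemma disjw_app n r e e' : (2 <= n)%nat -> disjw n e e' -> disjw n (r ++ e) (r ++ e').
Proof.
  intros h hd z h1 h2. apply in_phi_app in h1; auto. apply in_phi_app in h2; auto.
  apply (hd _ h1 h2).
Qed.

(** Exchanging the targets of two pieces of an element of V_n:
    M_{a,b} + M_{c,d} - M_{c,b} - M_{a,d} is a difference of two rho_x(g). *)
Lemma rho_difference n a b c d Ra Rb : (2 <= n)%nat ->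
  admissible n (a :: c :: Ra) -> admissible n (b :: d :: Rb) -> length Ra = length Rb ->
  exists G H, RhoSet n G /\ RhoSet n H /\ forall v z,
    Cminus (G v z) (H v z) =
    Cminus (Cminus (Cplus (Mop n a b v z) (Mop n c d v z)) (Mop n c b v z)) (Mop n a d v z).
Proof.
  intros h hA hB eL.
  exists (SumM n (combine (a :: c :: Ra) (b :: d :: Rb))),
         (SumM n (combine (c :: a :: Ra) (b :: d :: Rb))).
  split; [|split].
  - apply SumM_in_RhoSet; auto. simpl. unfold word in *. rewrite eL. reflexivity.
  - apply SumM_in_RhoSet; auto; [refine (adm_perm n _ _ _ hA); apply perm_swap|].
    simpl. unfold word in *. rewrite eL. reflexivity.
  - intros v z. simpl combine. rewrite !SumM_cons. simpl fst. simpl snd.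
    generalize (Mop n a b v z) (Mop n c d v z) (SumM n (combine Ra Rb) v z)
      (Mop n c b v z) (Mop n a d v z). intros. cring.
Qed.

Lemma csum_differences_span (P : op -> Prop) (D : nat -> op) :
  (forall j, exists G H, P G /\ P H /\ forall v z, Cminus (G v z) (H v z) = D j v z) ->
  forall m, exists S, Span P S /\ forall v z, S v z = csum m (fun j => D j v z).
Proof.
  intros hD. induction m as [|m [S [hS eS]]].
  - exists op_zero. split; [apply Span_zero|reflexivity].
  - destruct (hD m) as [G [H [hG [hH eGH]]]].
    exists (op_add S (op_add (op_scal (RtoC 1) G) (op_scal (RtoC (-1)) H))). split.
    + apply Span_add; auto. apply Span_add; apply Span_scal, Span_single; auto.
    + intros v z. simpl csum. rewrite <- eS, <- eGH. unfold op_add, op_scal. cring.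
Qed.

Lemma nat_large (r : R) : exists m : nat, (0 < m)%nat /\ r < INR m.
Proof.
  destruct (archimed r) as [h1 _]. destruct (Z_lt_le_dec (up r) 1) as [hz|hz].
  - exists 1%nat. split; [lia|]. simpl. assert (IZR (up r) <= 0) by (apply IZR_le; lia). lra.
  - exists (Z.to_nat (up r)). split; [lia|]. rewrite INR_IZR_INZ, Z2Nat.id by lia. lra.
Qed.

Lemma averaging_size eps : 0 < eps -> exists m : nat, (0 < m)%nat /\ 3 * (/ INR m * sqrt (INR m)) < eps.
Proof.
  intro he. destruct (nat_large (9 / eps ^ 2)) as [m [hm hr]]. exists m. split; auto.
  assert (hmp : 0 < INR m) by (apply lt_0_INR; lia).
  assert (hs : 0 < sqrt (INR m)) by (apply sqrt_lt_R0; lra).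
  replace (/ INR m * sqrt (INR m)) with (/ sqrt (INR m))
    by (rewrite <- (sqrt_sqrt (INR m)) at 2 by lra; field; lra).
  assert (3 / eps < sqrt (INR m)).
  { apply Rsqr_incrst_0.
    - unfold Rsqr. rewrite sqrt_sqrt by lra.
      replace (3 / eps * (3 / eps)) with (9 / eps ^ 2) by (field; lra). lra.
    - apply Rlt_le, Rdiv_lt_0_compat; lra.
    - apply sqrt_pos. }
  apply (Rmult_lt_reg_r (sqrt (INR m))); auto. unfold Rdiv in *.
  replace (3 * / sqrt (INR m) * sqrt (INR m)) with 3 by (field; lra).
  apply (Rmult_lt_compat_l eps) in H; [|lra].
  replace (eps * (3 * / eps)) with 3 in H by (field; lra). lra.
Qed.

(** With D_j = M_{a,b} + M_{y_j,x_j} - M_{y_j,b} - M_{a,x_j}, the operator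
    M_{a,b} - (1/m) sum_j D_j is the sum of three averages of matrix units
    with pairwise disjoint ranges or sources, hence of norm <= 3 / sqrt m. *)
Lemma averaging_estimate n x m a b (xs ys : nat -> word) (S : op) : (2 <= n)%nat -> (0 < m)%nat ->
  is_word n a -> is_word n b -> (forall j, is_word n (xs j)) -> (forall j, is_word n (ys j)) ->
  (forall j j', j <> j' -> disjw n (xs j) (xs j')) -> (forall j j', j <> j' -> disjw n (ys j) (ys j')) ->
  (forall v z, S v z = csum m (fun j => Cminus (Cminus (Cplus (Mop n a b v z)
      (Mop n (ys j) (xs j) v z)) (Mop n (ys j) b v z)) (Mop n a (xs j) v z))) ->
  OpNormLe n x (fun v z => Cminus (Mop n a b v z) (op_scal (RtoC (/ INR m)) S v z))
    (3 * (/ INR m * sqrt (INR m))).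
Proof.
  intros h hm ha hb hxw hyw dx dy eS.
  assert (hmp : 0 < INR m) by (apply lt_0_INR; lia).
  assert (hinv : Cmod (RtoC (/ INR m)) = / INR m /\ Cmod (RtoC (- / INR m)) = / INR m).
  { rewrite !Cmod_R, Rabs_Ropp, Rabs_pos_eq; [auto|left; apply Rinv_0_lt_compat; auto]. }
  assert (hb0 : 0 <= / INR m * sqrt (INR m))
    by (apply Rmult_le_pos; [left; apply Rinv_0_lt_compat; auto|apply sqrt_pos]).
  split; [lra|]. intros v c hv hc.
  apply (NormLe_ext n x (fun z =>
    Cplus (Cplus (Cmult (RtoC (/ INR m)) (csum m (fun j => Mop n a (xs j) v z)))
                 (Cmult (RtoC (/ INR m)) (csum m (fun j => Mop n (ys j) b v z))))
          (Cmult (RtoC (- / INR m)) (csum m (fun j => Mop n (ys j) (xs j) v z))))).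
  { intros z _. unfold op_scal. rewrite eS. clear eS.
    assert (ec : csum m (fun j => Cminus (Cminus (Cplus (Mop n a b v z) (Mop n (ys j) (xs j) v z))
                   (Mop n (ys j) b v z)) (Mop n a (xs j) v z)) =
      Cminus (Cminus (Cplus (Cmult (RtoC (INR m)) (Mop n a b v z))
        (csum m (fun j => Mop n (ys j) (xs j) v z))) (csum m (fun j => Mop n (ys j) b v z)))
        (csum m (fun j => Mop n a (xs j) v z))).
    { clear hm hmp hinv hb0. induction m; simpl csum; [cring|]. rewrite IHm, S_INR. cring. }
    rewrite ec. unfold Cminus, Cplus, Cmult, Copp, RtoC.
    apply injective_projections; simpl; field; lra. }
  replace (3 * (/ INR m * sqrt (INR m)) * c) with
    ((/ INR m * (sqrt (INR m) * c) + / INR m * (sqrt (INR m) * c)) + / INR m * (sqrt (INR m) * c))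
    by ring.
  apply NormLe_add; [apply NormLe_add|];
    (eapply NormLe_mono; [|apply NormLe_scal]; [rewrite (proj1 hinv) || rewrite (proj2 hinv); apply Rle_refl|]).
  - apply csum_disjoint_sources_norm; auto.
  - apply (csum_disjoint_ranges_norm n x m ys (fun _ => b)); auto.
  - apply csum_disjoint_ranges_norm; auto.
Qed.

Lemma Mop_rho_closure_nonempty n x a b : (2 <= n)%nat -> is_word n a -> is_word n b ->
  a <> [] -> b <> [] -> Closure n x (Span (RhoSet n)) (Mop n a b).
Proof.
  intros h ha hb nea neb.
  destruct (two_word_language n a h ha nea) as [ra [hra Pa]].
  destruct (two_word_language n b h hb neb) as [rb [hrb Pb]].
  (* x_j and y_j have pairwise disjoint cylinders; the offsets balance the language sizes *)
  set (xs := fun j : nat => rb ++ marker_word (j + length a)).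
  set (ys := fun j : nat => ra ++ marker_word (j + length b)).
  assert (hxw : forall j, is_word n (xs j))
    by (intro j; apply is_word_app; auto; apply marker_word_word; auto).
  assert (hyw : forall j, is_word n (ys j))
    by (intro j; apply is_word_app; auto; apply marker_word_word; auto).
  set (D := fun j v z => Cminus (Cminus (Cplus (Mop n a b v z) (Mop n (ys j) (xs j) v z))
                                        (Mop n (ys j) b v z)) (Mop n a (xs j) v z)).
  assert (hD : forall j, exists G H, RhoSet n G /\ RhoSet n H /\
                 forall v z, Cminus (G v z) (H v z) = D j v z).
  { intro j. destruct (Pb (marker_word (j + length a)) (marker_word_word n _ h)) as [Rb [hRb eRb]].
    destruct (Pa (marker_word (j + length b)) (marker_word_word n _ h)) as [Ra [hRa eRa]].
    apply (rho_difference n a b (ys j) (xs j) Ra Rb); auto.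
    unfold word in *. rewrite eRa, eRb, !marker_word_length. f_equal. f_equal. lia. }
  intros eps he. destruct (averaging_size eps he) as [m [hm hbound]].
  destruct (csum_differences_span (RhoSet n) D hD m) as [S [hS eS]].
  exists (op_scal (RtoC (/ INR m)) S). split; [apply Span_scal; auto|].
  exists (3 * (/ INR m * sqrt (INR m))). split; auto.
  apply (averaging_estimate n x m a b xs ys S); auto;
    intros j j' ne; apply disjw_app, marker_word_disj; auto; lia.
Qed.

Lemma in_phi_letter n a k z : (2 <= n)%nat -> (1 <= k <= n)%nat ->
  (in_phi n (a ++ [k]) z <-> in_phi n a z /\ k = digit n (coord n a z)).
Proof.
  intros h hk. rewrite in_phi_app, (in_phi_coord n a z) by auto.
  rewrite (in_phi_digit n k [] _ h (Forall_nil _) hk).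
  assert (in_phi n [] (fmap n (coord n a z))).
  { unfold in_phi. simpl. rewrite wlen_nil. pose proof (fmap_range n (coord n a z)). lra. }
  tauto.
Qed.

Lemma Mop_split n a b : (2 <= n)%nat ->
  Mop n a b = SumM n (map (fun k => (a ++ [k], b ++ [k])) (seq 1 n)).
Proof.
  intro h. apply functional_extensionality; intro v; apply functional_extensionality; intro z.
  destruct (in_phi_dec n a z) as [i|i].
  - destruct (digit_spec n (coord n a z) h (proj1 (in_phi_coord n a z h) i)) as [hk _].
    set (k := digit n (coord n a z)) in *.
    rewrite Mop_on by exact i. rewrite (SumM_at n _ v z (a ++ [k]) (b ++ [k])).
    + rewrite phimap_app by auto. reflexivity.
    + apply Injective_map_NoDup; [|apply seq_NoDup]. intros p q e. injection e.
      intros _ e'. apply app_inv_head in e'. congruence.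
    + apply in_map_iff. exists k. split; auto. apply in_seq. lia.
    + apply in_phi_letter; auto.
    + intros p hp hz. apply in_map_iff in hp as [k' [<- hk']]. apply in_seq in hk'.
      apply in_phi_letter in hz as [_ ->]; auto. lia.
  - rewrite Mop_off by exact i. symmetry. apply SumM_zero_at. intros p hp hz.
    apply in_map_iff in hp as [k' [<- hk']]. apply in_seq in hk'.
    apply i. apply in_phi_letter in hz as [hz _]; auto. lia.
Qed.

Lemma Mop_rho_closure n x a b : (2 <= n)%nat -> is_word n a -> is_word n b ->
  Closure n x (Span (RhoSet n)) (Mop n a b).
Proof.
  intros h ha hb. rewrite Mop_split by auto. apply Closure_span, SumM_span.
  intros p hp. apply in_map_iff in hp as [k [<- hk]]. apply in_seq in hk. simpl.
  assert (hkw : is_word n [k]) by (constructor; [lia|constructor]).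
  apply Mop_rho_closure_nonempty; auto; try (apply is_word_app; auto);
    intro e; apply (f_equal (@length nat)) in e; rewrite length_app in e; simpl in e; lia.
Qed.

Lemma PiOn_in_rho_closure n x T : (2 <= n)%nat -> BoundedOp n x T -> PiOn n x T ->
  Closure n x (Span (RhoSet n)) T.
Proof.
  intros h hT hP.
  assert (hA : MatUnitAlg n x T).
  { apply hP; [apply MatUnitAlg_CStar; auto|]. intros i hi.
    assert (hiw : is_word n [i]) by (constructor; [auto|constructor]).
    rewrite Sop_Mop by auto. split; [apply Mop_bounded; auto; constructor|].
    apply Closure_self, Span_single. exists [i], []. repeat split; auto. constructor. }
  apply (Closure_trans n x _ (Span (MatUnit n))); [|apply hA].
  intros A hA'. apply Closure_span. revert hA'. apply Span_ind.
  - apply Span_zero.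
  - intros; apply Span_add; auto.
  - intros; apply Span_scal; auto.
  - intros M [a [b [ha [hb ->]]]]. apply Span_single. apply Mop_rho_closure; auto.
Qed.

Theorem theorem4p10 (n : nat) (x : R) :
  (2 <= n)%nat -> 0 <= x < 1 ->
  forall T : op, BoundedOp n x T ->
    (Closure n x (Span (RhoSet n)) T <-> PiOn n x T).
Proof.
  intros h _ T hT. split.
  - apply rho_closure_in_PiOn; auto.
  - apply PiOn_in_rho_closure; auto.
Qed.
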